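(* For all integers $n\ge4$ and $1\le f\le n$, $\mathcal{C}(n,f)\neq\emptyset$; that is, there exists a transitive circle exchange transformation of $n$ subintervals with exactly $f$ flips.
   Context: Let $S^1=[0,1]/(0\sim1)$ with orientation induced by $[0,1]$. An $n$-CET is an injective map $T:\bigcup_{i=1}^n I_i\to S^1$, where $I_1,\dots,I_n$ are pairwise disjoint open subintervals of $S^1$ whose closures cover $S^1$, which is an isometry on each $I_i$ and cannot be continuously extended to a larger open subset of $S^1$. A flip is an $I_i$ on which $T$ reverses orientation. $T$ is transitive if some orbit $\{T^m(p): m\in\mathbb{Z},\ p\in\mathrm{Dom}(T^m)\}$ is dense in $S^1$. $\mathcal{C}(n,f)$ is the set of transitive $n$-CETs with exactly $f$ flips. *)

From Stdlib Require Import Reals List.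
Open Scope R_scope.

(* The circle S^1 = [0,1]/(0~1) is represented by the reals x with 0 <= x < 1;
   the orientation is the one induced by [0,1] (increasing x). *)
Definition in_circle (x : R) : Prop := 0 <= x < 1.

Definition md1 (r : R) : R := frac_part r.

Definition cdist (x y : R) : R := Rmin (md1 (x - y)) (md1 (y - x)).

Definition arc (a l : R) (x : R) : Prop :=
  in_circle x /\ 0 < md1 (x - a) < l.

Definition is_open_subinterval (J : R -> Prop) : Prop :=
  exists a l, in_circle a /\ 0 < l <= 1 /\ forall x, J x <-> arc a l x.

Definition closure_circ (J : R -> Prop) (x : R) : Prop :=
  in_circle x /\ forall eps, 0 < eps -> exists y, J y /\ cdist x y < eps.

Definition open_circ (U : R -> Prop) : Prop :=
  (forall x, U x -> in_circle x) /\
  forall x, U x -> exists eps, 0 < eps /\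
    forall y, in_circle y -> cdist x y < eps -> U y.

Definition continuous_on_circ (U : R -> Prop) (g : R -> R) : Prop :=
  forall x eps, U x -> 0 < eps -> exists delta, 0 < delta /\
    forall y, U y -> cdist x y < delta -> cdist (g x) (g y) < eps.

Definition isometry_on (J : R -> Prop) (T : R -> R) : Prop :=
  forall x y, J x -> J y -> cdist (T x) (T y) = cdist x y.

Definition reverses_orientation (J : R -> Prop) (T : R -> R) : Prop :=
  forall x y, J x -> J y -> md1 (T y - T x) = md1 (x - y).

Definition dom (n : nat) (I : nat -> R -> Prop) (x : R) : Prop :=
  exists i, (i < n)%nat /\ I i x.

Definition not_extendable (D : R -> Prop) (T : R -> R) : Prop :=
  ~ exists (U : R -> Prop) (g : R -> R),
      open_circ U /\ (forall x, D x -> U x) /\ (exists x, U x /\ ~ D x) /\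
      (forall x, U x -> in_circle (g x)) /\ (forall x, D x -> g x = T x) /\
      continuous_on_circ U g.

Definition is_CET (n : nat) (I : nat -> R -> Prop) (T : R -> R) : Prop :=
  (forall i, (i < n)%nat -> is_open_subinterval (I i)) /\
  (forall i j x, (i < n)%nat -> (j < n)%nat -> i <> j -> I i x -> I j x -> False) /\
  (forall x, in_circle x -> exists i, (i < n)%nat /\ closure_circ (I i) x) /\
  (forall x, dom n I x -> in_circle (T x)) /\
  (forall x y, dom n I x -> dom n I y -> T x = T y -> x = y) /\
  (forall i, (i < n)%nat -> isometry_on (I i) T) /\
  not_extendable (dom n I) T.

(* q = T^m(p) with p in Dom(T^m), for m >= 0 (forward) and m <= 0 (backward) *)
Fixpoint fwd (D : R -> Prop) (T : R -> R) (m : nat) (p q : R) : Prop :=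
  match m with
  | O => q = p
  | S k => exists r, fwd D T k p r /\ D r /\ q = T r
  end.

Fixpoint bwd (D : R -> Prop) (T : R -> R) (m : nat) (p q : R) : Prop :=
  match m with
  | O => q = p
  | S k => exists r, bwd D T k p r /\ D q /\ T q = r
  end.

Definition orbit (D : R -> Prop) (T : R -> R) (p q : R) : Prop :=
  exists m, fwd D T m p q \/ bwd D T m p q.

Definition transitive (D : R -> Prop) (T : R -> R) : Prop :=
  exists p, in_circle p /\
    forall y eps, in_circle y -> 0 < eps ->
      exists q, orbit D T p q /\ cdist q y < eps.

Definition exactly_flips (n : nat) (I : nat -> R -> Prop) (T : R -> R) (f : nat) : Prop :=
  exists S : list nat, NoDup S /\ length S = f /\
    forall i, In i S <-> ((i < n)%nat /\ reverses_orientation (I i) T).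

Definition in_C (n f : nat) (T : R -> R) : Prop :=
  exists I : nat -> R -> Prop,
    is_CET n I T /\ transitive (dom n I) T /\ exactly_flips n I T f.

From Stdlib Require Import Reals List Lra Lia ZArith Classical Permutation.
Import ListNotations.
Open Scope R_scope.

(* Every example is a tower over an irrational rotation. The circle is cut into [m] equal slots;
   the map carries each level of the tower isometrically onto the next one, reversing the
   orientation at prescribed levels, and sends the top level back onto the bottom one through the
   rotation of that slot by [alpha0 / m] ([alpha0 = sqrt 2 - 1]), reflected when the number of
   reversals is odd. The first return map to the bottom level is then an irrational rotation, whose
   orbits are dense, so an orbit climbing the tower is dense in the circle. Placing the levels among
   the slots so that the images of adjacent slots never fit together makes the map jump at every
   breakpoint, so that the pieces are maximal. The choice of the reversed levels, and merging two
   slots into one piece, adjust the numbers of pieces and of flips: explicit families cover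
   [n >= 9], a table checked by computation covers [4 <= n <= 8]. *)

(** * Reduction mod 1 and the metric of the circle *)

Lemma md1_eq_sub (r : R) (z : Z) : IZR z <= r < IZR z + 1 -> md1 r = r - IZR z.
Proof.
  intros H. unfold md1, frac_part.
  rewrite <- (Int_part_spec r z); [reflexivity|lra].
Qed.

Lemma md1_small (r : R) : 0 <= r < 1 -> md1 r = r.
Proof. intros H. rewrite (md1_eq_sub r 0); simpl; lra. Qed.

Lemma md1_neg (r : R) : -1 <= r < 0 -> md1 r = r + 1.
Proof. intros H. rewrite (md1_eq_sub r (-1)); simpl; lra. Qed.

Lemma md1_bounds (r : R) : 0 <= md1 r < 1.
Proof. unfold md1. destruct (base_fp r). lra. Qed.

Lemma md1_sub_int (r : R) : exists z : Z, md1 r = r - IZR z.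
Proof. exists (Int_part r). reflexivity. Qed.

Lemma md1_add_int (x : R) (z : Z) : md1 (x + IZR z) = md1 x.
Proof.
  destruct (md1_sub_int x) as [z0 H0]. pose proof (md1_bounds x).
  rewrite H0, (md1_eq_sub _ (z0 + z)); rewrite plus_IZR; lra.
Qed.

Lemma md1_opp (x : R) : md1 x <> 0 -> md1 (- x) = 1 - md1 x.
Proof.
  intros Hx. destruct (md1_sub_int x) as [z Hz]. pose proof (md1_bounds x).
  rewrite (md1_eq_sub (- x) (- z - 1)); rewrite ?minus_IZR, ?opp_IZR; simpl; lra.
Qed.

Lemma IZR_between_0_1 (z : Z) : 0 < IZR z < 1 -> False.
Proof. intros [H1 H2]. apply lt_IZR in H1. apply lt_IZR in H2. lia. Qed.

(** [cdist u v] is the least distance from [u - v] to an integer. *)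

Lemma cdist_attained (u v : R) : exists k : Z, Rabs (u - v - IZR k) = cdist u v.
Proof.
  unfold cdist.
  destruct (md1_sub_int (u - v)) as [z1 H1]. destruct (md1_sub_int (v - u)) as [z2 H2].
  pose proof (md1_bounds (u - v)). pose proof (md1_bounds (v - u)).
  unfold Rmin. destruct (Rle_dec (md1 (u - v)) (md1 (v - u))).
  - exists z1. rewrite H1 in *. rewrite Rabs_right; lra.
  - exists (- z2)%Z. rewrite opp_IZR, H2 in *. rewrite Rabs_left1; lra.
Qed.

Lemma cdist_le_shift (u v : R) (k : Z) : cdist u v <= Rabs (u - v - IZR k).
Proof.
  unfold cdist. destruct (md1_sub_int (u - v)) as [z Hz].
  replace (v - u) with (- (u - v)) by ring.
  pose proof (md1_bounds (u - v)). pose proof (md1_bounds (- (u - v))).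
  destruct (Z_le_gt_dec k z) as [Hk|Hk].
  - apply IZR_le in Hk. eapply Rle_trans; [apply Rmin_l|]. rewrite Rabs_right; lra.
  - assert (IZR k >= IZR z + 1) by (rewrite <- plus_IZR; apply Rle_ge, IZR_le; lia).
    eapply Rle_trans; [apply Rmin_r|].
    destruct (Req_dec (md1 (u - v)) 0) as [E|E].
    + rewrite Rabs_left1; lra.
    + rewrite md1_opp, Rabs_left1; lra.
Qed.

Lemma cdist_nonneg (u v : R) : 0 <= cdist u v.
Proof. destruct (cdist_attained u v) as [k <-]. apply Rabs_pos. Qed.

Lemma cdist_le_abs (x y : R) : cdist x y <= Rabs (x - y).
Proof. pose proof (cdist_le_shift x y 0) as H. rewrite Rminus_0_r in H. exact H. Qed.

Lemma cdist_triangle (x y z : R) : cdist x z <= cdist x y + cdist y z.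
Proof.
  destruct (cdist_attained x y) as [k1 H1]. destruct (cdist_attained y z) as [k2 H2].
  eapply Rle_trans; [apply (cdist_le_shift x z (k1 + k2))|].
  rewrite plus_IZR, <- H1, <- H2.
  replace (x - z - (IZR k1 + IZR k2)) with ((x - y - IZR k1) + (y - z - IZR k2)) by ring.
  apply Rabs_triang.
Qed.

Lemma cdist_sym (x y : R) : cdist x y = cdist y x.
Proof. apply Rmin_comm. Qed.

Lemma cdist_same_diff (x y u v : R) : x - y = u - v -> cdist x y = cdist u v.
Proof. intros H. unfold cdist. rewrite H. replace (y - x) with (v - u) by lra. reflexivity. Qed.

Lemma cdist_opp_diff (x y u v : R) : x - y = v - u -> cdist x y = cdist u v.
Proof. intros H. rewrite (cdist_same_diff x y v u H). apply cdist_sym. Qed.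

(** Two points of [[0, 1]] that are distinct on the circle. *)
Definition distinct_mod1 (u v : R) : Prop := u <> v /\ u - v <> 1 /\ v - u <> 1.

Lemma cdist_pos (u v : R) : 0 <= u <= 1 -> 0 <= v <= 1 -> distinct_mod1 u v -> 0 < cdist u v.
Proof.
  intros Hu Hv (H1 & H2 & H3). destruct (cdist_attained u v) as [k Hk].
  destruct (Req_dec (u - v - IZR k) 0) as [E|E].
  2: { rewrite <- Hk. apply Rabs_pos_lt, E. }
  exfalso. assert (Ek : u - v = IZR k) by lra.
  assert (-1 <= IZR k <= 1) as [Hk1 Hk2] by lra.
  apply le_IZR in Hk1. apply le_IZR in Hk2.
  assert (Hk3 : k = (-1)%Z \/ k = 0%Z \/ k = 1%Z) by lia.
  destruct Hk3 as [ -> | [ -> | -> ] ]; simpl in Ek; lra.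
Qed.

Lemma arc_iff (a l x : R) : 0 <= a -> a + l <= 1 -> 0 < l -> in_circle x ->
  (arc a l x <-> a < x < a + l).
Proof.
  intros Ha Hal Hl Hx. unfold arc, in_circle in *. split.
  - intros [_ H]. destruct (Rle_lt_dec a x).
    + rewrite md1_small in H; lra.
    + rewrite md1_neg in H; lra.
  - intros H. split; [assumption|]. rewrite md1_small; lra.
Qed.

Lemma continuous_on_circ_no_jump (U D : R -> Prop) (T g : R -> R) (x a b : R) :
  continuous_on_circ U g -> U x -> (forall y, D y -> U y) -> (forall y, D y -> g y = T y) ->
  (forall h, 0 < h -> exists y z, D y /\ D z /\ cdist x y < h /\ cdist x z < h /\
                                  cdist a (T y) < h /\ cdist (T z) b < h) ->
  cdist a b = 0.
Proof.
  intros Hg Ux HDU HgT Hnear.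
  destruct (Rle_lt_or_eq_dec _ _ (cdist_nonneg a b)) as [Hab|]; [exfalso|congruence].
  set (e := cdist a b / 4).
  destruct (Hg x e Ux ltac:(unfold e; lra)) as [delta [Hdelta Hcont]].
  destruct (Hnear (Rmin delta e) ltac:(apply Rmin_glb_lt; unfold e; lra))
    as [y [z (Dy & Dz & Hy & Hz & HTy & HTz)]].
  pose proof (Rmin_l delta e). pose proof (Rmin_r delta e).
  assert (Gy : cdist (g x) (T y) < e) by (rewrite <- (HgT y Dy); apply Hcont; auto; lra).
  assert (Gz : cdist (g x) (T z) < e) by (rewrite <- (HgT z Dz); apply Hcont; auto; lra).
  pose proof (cdist_triangle a (T y) b). pose proof (cdist_triangle (T y) (g x) b).
  pose proof (cdist_triangle (g x) (T z) b). rewrite (cdist_sym (T y) (g x)) in *.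
  unfold e in *. lra.
Qed.

(** * Circle exchanges given by interval data *)

(* Piece [i < cd_pieces D] is the interval [(cd_left D i, cd_left D i + cd_width D i)],
   mapped isometrically onto [(cd_target D i, cd_target D i + cd_width D i)],
   reversing the orientation iff [cd_flip D i]. *)
Record cet_data := mk_cet_data {
  cd_pieces : nat;
  cd_left : nat -> R;
  cd_width : nat -> R;
  cd_target : nat -> R;
  cd_flip : nat -> bool }.

Definition piece_map (D : cet_data) (i : nat) (u : R) : R :=
  if cd_flip D i then cd_left D i + cd_width D i + cd_target D i - u
  else u - cd_left D i + cd_target D i.

Fixpoint cet_map_upto (D : cet_data) (k : nat) (u : R) : R :=
  match k with
  | O => 0
  | S k' =>
      if Rlt_dec (cd_left D k') u then
        if Rlt_dec u (cd_left D k' + cd_width D k') then piece_map D k' u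
        else cet_map_upto D k' u
      else cet_map_upto D k' u
  end.

Definition cet_map (D : cet_data) : R -> R := cet_map_upto D (cd_pieces D).

Definition cet_piece (D : cet_data) (i : nat) : R -> Prop := arc (cd_left D i) (cd_width D i).

Definition image_left_end (D : cet_data) (i : nat) : R :=
  if cd_flip D i then cd_target D i + cd_width D i else cd_target D i.

Definition image_right_end (D : cet_data) (i : nat) : R :=
  if cd_flip D i then cd_target D i else cd_target D i + cd_width D i.

Definition prev_piece (D : cet_data) (i : nat) : nat :=
  match i with O => pred (cd_pieces D) | S k => k end.

Definition apart (a v b w : R) : Prop := a + v <= b \/ b + w <= a.

Record cet_data_ok (D : cet_data) : Prop := {
  cd_pieces_pos : (1 <= cd_pieces D)%nat;
  cd_left_0 : cd_left D 0 = 0;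
  cd_left_S : forall i, (S i < cd_pieces D)%nat ->
    cd_left D (S i) = cd_left D i + cd_width D i;
  cd_left_last : cd_left D (pred (cd_pieces D)) + cd_width D (pred (cd_pieces D)) = 1;
  cd_width_pos : forall i, (i < cd_pieces D)%nat -> 0 < cd_width D i;
  cd_target_bounds : forall i, (i < cd_pieces D)%nat ->
    0 <= cd_target D i /\ cd_target D i + cd_width D i <= 1;
  cd_targets_apart : forall i j, (i < cd_pieces D)%nat -> (j < cd_pieces D)%nat -> i <> j ->
    apart (cd_target D i) (cd_width D i) (cd_target D j) (cd_width D j);
  (* the map jumps at every breakpoint, so that the pieces are maximal *)
  cd_jumps : forall i, (i < cd_pieces D)%nat ->
    distinct_mod1 (image_right_end D (prev_piece D i)) (image_left_end D i) }.

Definition flip_count (D : cet_data) : nat := length (filter (cd_flip D) (seq 0 (cd_pieces D))).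

Section CetData.

Variable D : cet_data.
Hypothesis HD : cet_data_ok D.

Local Notation n := (cd_pieces D).
Local Notation a := (cd_left D).
Local Notation l := (cd_width D).

Lemma cd_left_mono (i j : nat) : (i < j)%nat -> (j < n)%nat -> a i + l i <= a j.
Proof.
  intros Hij Hj. induction j as [|j IH]; [lia|].
  rewrite (cd_left_S D HD) by exact Hj.
  destruct (Nat.eq_dec i j) as [->|Hne]; [lra|].
  assert (a i + l i <= a j) by (apply IH; lia).
  pose proof (cd_width_pos D HD j ltac:(lia)). lra.
Qed.

Lemma cd_piece_bounds (i : nat) : (i < n)%nat -> 0 <= a i /\ a i + l i <= 1.
Proof.
  intros Hi. pose proof (cd_pieces_pos D HD) as Hn.
  pose proof (cd_width_pos D HD) as Hl. split.
  - destruct i as [|i].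
    + rewrite (cd_left_0 D HD). lra.
    + pose proof (cd_left_mono 0 (S i) ltac:(lia) Hi).
      pose proof (Hl 0%nat ltac:(lia)). rewrite (cd_left_0 D HD) in *. lra.
  - destruct (Nat.eq_dec i (pred n)) as [->|Hne].
    + apply Req_le, (cd_left_last D HD).
    + pose proof (cd_left_mono i (pred n) ltac:(lia) ltac:(lia)).
      pose proof (cd_left_last D HD). pose proof (Hl (pred n) ltac:(lia)).
      lra.
Qed.

Lemma cd_pieces_disjoint (i j : nat) (u : R) : (i < n)%nat -> (j < n)%nat ->
  a i < u < a i + l i -> a j < u < a j + l j -> i = j.
Proof.
  intros Hi Hj H1 H2.
  destruct (Nat.lt_total i j) as [Hlt|[E|Hlt]]; [|exact E|].
  - pose proof (cd_left_mono i j Hlt Hj). lra.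
  - pose proof (cd_left_mono j i Hlt Hi). lra.
Qed.

Lemma cet_map_eq (i : nat) (u : R) : (i < n)%nat -> a i < u < a i + l i ->
  cet_map D u = piece_map D i u.
Proof.
  intros Hi Hu. unfold cet_map.
  assert (Hk : forall k, (k <= n)%nat -> (i < k)%nat -> cet_map_upto D k u = piece_map D i u).
  { induction k as [|k IH]; intros Hk Hik; [lia|]. simpl.
    destruct (Rlt_dec (cd_left D k) u); [destruct (Rlt_dec u (cd_left D k + cd_width D k))|].
    - replace k with i; [reflexivity|].
      apply (cd_pieces_disjoint i k u); auto; lia.
    - apply IH; [lia|]. destruct (Nat.eq_dec i k) as [->|]; [lra|lia].
    - apply IH; [lia|]. destruct (Nat.eq_dec i k) as [->|]; [lra|lia]. }
  apply Hk; lia.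
Qed.

Lemma piece_map_bounds (i : nat) (u : R) : a i < u < a i + l i ->
  cd_target D i < piece_map D i u < cd_target D i + l i.
Proof. intros. unfold piece_map. destruct (cd_flip D i); lra. Qed.

Lemma piece_map_sub (i : nat) (x y : R) :
  piece_map D i x - piece_map D i y = if cd_flip D i then y - x else x - y.
Proof. unfold piece_map. destruct (cd_flip D i); ring. Qed.

Lemma cet_piece_iff (i : nat) (x : R) : (i < n)%nat -> in_circle x ->
  (cet_piece D i x <-> a i < x < a i + l i).
Proof.
  intros Hi Hx. pose proof (cd_piece_bounds i Hi). pose proof (cd_width_pos D HD i Hi).
  apply arc_iff; auto; lra.
Qed.

Lemma cet_piece_intro (i : nat) (x : R) : (i < n)%nat -> a i < x < a i + l i -> cet_piece D i x.
Proof.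
  intros Hi Hx. pose proof (cd_piece_bounds i Hi).
  apply cet_piece_iff; auto. unfold in_circle. lra.
Qed.

Lemma dom_cet_piece (x : R) : dom n (cet_piece D) x -> exists i, (i < n)%nat /\ a i < x < a i + l i.
Proof.
  intros [i [Hi Hx]]. exists i. split; auto. apply (cet_piece_iff i x Hi (proj1 Hx)), Hx.
Qed.

Lemma cd_closed_pieces_cover (x : R) : 0 <= x < 1 -> exists i, (i < n)%nat /\ a i <= x <= a i + l i.
Proof.
  intros Hx. pose proof (cd_pieces_pos D HD).
  assert (Hk : forall k, (k < n)%nat -> x <= a k + l k ->
            exists i, (i <= k)%nat /\ a i <= x <= a i + l i).
  { induction k as [|k IH]; intros Hk Hxk.
    - exists 0%nat. split; [lia|]. rewrite (cd_left_0 D HD) in *. lra.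
    - destruct (Rle_lt_dec x (a k + l k)).
      + destruct (IH ltac:(lia) r) as [i [? ?]]. exists i. split; [lia|auto].
      + exists (S k). split; [lia|]. rewrite (cd_left_S D HD) in * by exact Hk. lra. }
  destruct (Hk (pred n) ltac:(lia)) as [i [? ?]].
  { pose proof (cd_left_last D HD). lra. }
  exists i. split; [lia|auto].
Qed.

Lemma cet_closures_cover (x : R) : in_circle x ->
  exists i, (i < n)%nat /\ closure_circ (cet_piece D i) x.
Proof.
  intros Hx. destruct (cd_closed_pieces_cover x Hx) as [i [Hi Hxi]].
  exists i. split; auto. split; auto. intros eps Heps.
  pose proof (cd_width_pos D HD i Hi).
  pose proof (Rmin_l (eps / 2) (l i / 4)). pose proof (Rmin_r (eps / 2) (l i / 4)).
  assert (0 < Rmin (eps / 2) (l i / 4)) by (apply Rmin_glb_lt; lra).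
  set (h := Rmin (eps / 2) (l i / 4)) in *.
  destruct (Rlt_le_dec x (a i + l i / 2)).
  - exists (x + h). split; [apply cet_piece_intro; auto; lra|].
    eapply Rle_lt_trans; [apply cdist_le_abs|]. rewrite Rabs_left1; lra.
  - exists (x - h). split; [apply cet_piece_intro; auto; lra|].
    eapply Rle_lt_trans; [apply cdist_le_abs|]. rewrite Rabs_right; lra.
Qed.

Lemma cet_map_in_circle (x : R) : dom n (cet_piece D) x -> in_circle (cet_map D x).
Proof.
  intros Hx. destruct (dom_cet_piece x Hx) as [i [Hi Hxi]].
  rewrite (cet_map_eq i x Hi Hxi). pose proof (piece_map_bounds i x Hxi).
  pose proof (cd_target_bounds D HD i Hi). unfold in_circle. lra.
Qed.

Lemma cet_map_injective (x y : R) : dom n (cet_piece D) x -> dom n (cet_piece D) y ->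
  cet_map D x = cet_map D y -> x = y.
Proof.
  intros Hx Hy E. destruct (dom_cet_piece x Hx) as [i [Hi Hxi]].
  destruct (dom_cet_piece y Hy) as [j [Hj Hyj]].
  rewrite (cet_map_eq i x Hi Hxi), (cet_map_eq j y Hj Hyj) in E.
  destruct (Nat.eq_dec i j) as [<-|Hne].
  - pose proof (piece_map_sub i x y) as Hs. rewrite E in Hs. destruct (cd_flip D i); lra.
  - pose proof (piece_map_bounds i x Hxi). pose proof (piece_map_bounds j y Hyj).
    destruct (cd_targets_apart D HD i j Hi Hj Hne); lra.
Qed.

Lemma cet_map_isometry (i : nat) : (i < n)%nat -> isometry_on (cet_piece D i) (cet_map D).
Proof.
  intros Hi x y Hx Hy.
  apply (cet_piece_iff i x Hi (proj1 Hx)) in Hx. apply (cet_piece_iff i y Hi (proj1 Hy)) in Hy.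
  rewrite (cet_map_eq i x Hi Hx), (cet_map_eq i y Hi Hy).
  pose proof (piece_map_sub i x y). destruct (cd_flip D i).
  - apply cdist_opp_diff; lra.
  - apply cdist_same_diff; lra.
Qed.

Lemma not_dom_left_end (x : R) : in_circle x -> ~ dom n (cet_piece D) x ->
  exists i, (i < n)%nat /\ x = a i.
Proof.
  intros Cx nDx. destruct (cd_closed_pieces_cover x Cx) as [i [Hi Hxi]].
  destruct (Req_dec x (a i)) as [E|E]; [exists i; auto|].
  destruct (Req_dec x (a i + l i)) as [E2|E2].
  - destruct (Nat.lt_ge_cases (S i) n).
    + exists (S i). split; auto. rewrite (cd_left_S D HD); auto.
    + assert (i = pred n) by lia. subst i.
      pose proof (cd_left_last D HD). unfold in_circle in Cx. lra.
  - exfalso. apply nDx. exists i. split; auto. apply cet_piece_intro; auto. lra.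
Qed.

Lemma piece_map_near_left_end (i : nat) (h : R) : 0 <= h ->
  Rabs (piece_map D i (a i + h) - image_left_end D i) = h.
Proof.
  intros Hh. unfold piece_map, image_left_end.
  destruct (cd_flip D i).
  - replace (a i + l i + cd_target D i - (a i + h) - (cd_target D i + l i)) with (- h) by ring.
    rewrite Rabs_Ropp, Rabs_right; lra.
  - replace (a i + h - a i + cd_target D i - cd_target D i) with h by ring.
    rewrite Rabs_right; lra.
Qed.

Lemma piece_map_near_right_end (i : nat) (h : R) : 0 <= h ->
  Rabs (image_right_end D i - piece_map D i (a i + l i - h)) = h.
Proof.
  intros Hh. unfold piece_map, image_right_end.
  destruct (cd_flip D i).
  - replace (cd_target D i - (a i + l i + cd_target D i - (a i + l i - h))) with (- h) by ring.
    rewrite Rabs_Ropp, Rabs_right; lra.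
  - replace (cd_target D i + l i - (a i + l i - h - a i + cd_target D i)) with h by ring.
    rewrite Rabs_right; lra.
Qed.

Lemma cdist_left_end_prev (i : nat) (h : R) : (i < n)%nat -> 0 <= h ->
  cdist (a i) (a (prev_piece D i) + l (prev_piece D i) - h) <= h.
Proof.
  intros Hi Hh. destruct i as [|i]; simpl.
  - pose proof (cd_left_last D HD). rewrite (cd_left_0 D HD).
    eapply Rle_trans; [apply (cdist_le_shift _ _ (-1))|].
    replace (0 - (cd_left D (pred (cd_pieces D)) + cd_width D (pred (cd_pieces D)) - h) - IZR (-1))
      with h by (simpl; lra).
    rewrite Rabs_right; lra.
  - rewrite (cd_left_S D HD) by exact Hi.
    eapply Rle_trans; [apply cdist_le_abs|].
    replace (a i + l i - (a i + l i - h)) with h by ring. rewrite Rabs_right; lra.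
Qed.

Lemma cet_not_extendable : not_extendable (dom n (cet_piece D)) (cet_map D).
Proof.
  intros [U [g (HU & HDU & [x [Ux nDx]] & _ & HgT & Hg)]].
  destruct (not_dom_left_end x (proj1 HU x Ux) nDx) as [i [Hi ->]].
  set (j := prev_piece D i).
  assert (Hj : (j < n)%nat) by (unfold j, prev_piece; destruct i; lia).
  pose proof (cd_jumps D HD i Hi) as Hjump. fold j in Hjump.
  assert (Hends : 0 <= image_right_end D j <= 1 /\ 0 <= image_left_end D i <= 1).
  { pose proof (cd_target_bounds D HD i Hi). pose proof (cd_target_bounds D HD j Hj).
    pose proof (cd_width_pos D HD i Hi). pose proof (cd_width_pos D HD j Hj).
    unfold image_right_end, image_left_end. destruct (cd_flip D i), (cd_flip D j); lra. }
  pose proof (cdist_pos _ _ (proj1 Hends) (proj2 Hends) Hjump).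
  enough (cdist (image_right_end D j) (image_left_end D i) = 0) by lra.
  apply (continuous_on_circ_no_jump U (dom n (cet_piece D)) (cet_map D) g (a i)); auto.
  intros h0 Hh0. pose proof (cd_width_pos D HD i Hi). pose proof (cd_width_pos D HD j Hj).
  pose proof (Rmin_l (h0 / 2) (Rmin (l i / 2) (l j / 2))).
  pose proof (Rmin_r (h0 / 2) (Rmin (l i / 2) (l j / 2))).
  pose proof (Rmin_l (l i / 2) (l j / 2)). pose proof (Rmin_r (l i / 2) (l j / 2)).
  assert (0 < Rmin (h0 / 2) (Rmin (l i / 2) (l j / 2))) by (repeat apply Rmin_glb_lt; lra).
  set (h := Rmin (h0 / 2) (Rmin (l i / 2) (l j / 2))) in *.
  assert (Hy : a j < a j + l j - h < a j + l j) by lra.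
  assert (Hz : a i < a i + h < a i + l i) by lra.
  exists (a j + l j - h), (a i + h). repeat split.
  - exists j. split; auto. apply cet_piece_intro; auto.
  - exists i. split; auto. apply cet_piece_intro; auto.
  - pose proof (cdist_left_end_prev i h Hi ltac:(lra)) as Hc. fold j in Hc. lra.
  - eapply Rle_lt_trans; [apply cdist_le_abs|].
    replace (a i - (a i + h)) with (- h) by ring. rewrite Rabs_Ropp, Rabs_right; lra.
  - rewrite (cet_map_eq j _ Hj Hy). eapply Rle_lt_trans; [apply cdist_le_abs|].
    rewrite piece_map_near_right_end; lra.
  - rewrite (cet_map_eq i _ Hi Hz). eapply Rle_lt_trans; [apply cdist_le_abs|].
    rewrite piece_map_near_left_end; lra.
Qed.

Theorem cet_data_is_CET : is_CET n (cet_piece D) (cet_map D).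
Proof.
  split; [|split; [|split; [|split; [|split; [|split]]]]].
  - intros i Hi. exists (a i), (l i). pose proof (cd_piece_bounds i Hi).
    pose proof (cd_width_pos D HD i Hi). unfold in_circle.
    split; [lra|]. split; [lra|]. reflexivity.
  - intros i j x Hi Hj Hne Hx Hy. apply Hne.
    apply (cd_pieces_disjoint i j x Hi Hj);
      [apply (cet_piece_iff i x Hi (proj1 Hx)) | apply (cet_piece_iff j x Hj (proj1 Hx))]; auto.
  - exact cet_closures_cover.
  - exact cet_map_in_circle.
  - exact cet_map_injective.
  - exact cet_map_isometry.
  - exact cet_not_extendable.
Qed.

Lemma cet_piece_reverses (i : nat) : (i < n)%nat ->
  reverses_orientation (cet_piece D i) (cet_map D) <-> cd_flip D i = true.
Proof.
  intros Hi. pose proof (cd_width_pos D HD i Hi). pose proof (cd_piece_bounds i Hi). split.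
  - intros Hrev. destruct (cd_flip D i) eqn:E; [reflexivity|exfalso].
    set (x := a i + l i / 4). set (y := a i + l i / 2).
    assert (Hx : a i < x < a i + l i) by (unfold x in *; lra).
    assert (Hy : a i < y < a i + l i) by (unfold y in *; lra).
    pose proof (Hrev x y (cet_piece_intro i x Hi Hx) (cet_piece_intro i y Hi Hy)) as HR.
    rewrite (cet_map_eq i x Hi Hx), (cet_map_eq i y Hi Hy), piece_map_sub, E in HR.
    unfold x, y in HR. rewrite md1_small, md1_neg in HR; lra.
  - intros Hf x y Hx Hy.
    apply (cet_piece_iff i x Hi (proj1 Hx)) in Hx. apply (cet_piece_iff i y Hi (proj1 Hy)) in Hy.
    rewrite (cet_map_eq i x Hi Hx), (cet_map_eq i y Hi Hy), piece_map_sub, Hf. reflexivity.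
Qed.

Theorem cet_data_flips : exactly_flips n (cet_piece D) (cet_map D) (flip_count D).
Proof.
  exists (filter (cd_flip D) (seq 0 n)). split; [|split; [reflexivity|]].
  - apply NoDup_filter, seq_NoDup.
  - intros i. rewrite filter_In, in_seq. split.
    + intros [[_ Hi] Hf]. split; [lia|]. apply cet_piece_reverses; [lia|auto].
    + intros [Hi Hrev]. split; [lia|]. apply cet_piece_reverses; auto.
Qed.

End CetData.

(** * Irrational rotations *)

Definition irrational (al : R) : Prop :=
  forall (z : Z) (q : nat), (0 < q)%nat -> al * INR q <> IZR z.

Lemma Z_sq_eq_double_sq (a b : Z) : (a * a = 2 * b * b)%Z -> b = 0%Z.
Proof.
  assert (Hodd : forall c d, ((2 * c + 1) * (2 * c + 1) <> 2 * d * d)%Z) by (intros; lia).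
  assert (Hdesc : forall k a b, (Z.abs_nat b <= k)%nat -> (a * a = 2 * b * b)%Z -> b = 0%Z).
  { induction k as [|k IH]; intros a' b' Hb E; [lia|].
    destruct (Z.Even_or_Odd a') as [[c ->]|[c ->]]; [|exfalso; apply (Hodd c b'); lia].
    destruct (Z.Even_or_Odd b') as [[d ->]|[d ->]]; [|exfalso; apply (Hodd d c); lia].
    assert (d = 0%Z) by (apply (IH c d); lia). lia. }
  apply (Hdesc (Z.abs_nat b) a b). lia.
Qed.

Definition alpha0 : R := sqrt 2 - 1.

Lemma alpha0_bounds : 0 < alpha0 < 1.
Proof.
  unfold alpha0.
  assert (1 < sqrt 2) by (rewrite <- sqrt_1; apply sqrt_lt_1; lra).
  pose proof (sqrt_sqrt 2 ltac:(lra)). nra.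
Qed.

Lemma alpha0_irrational : irrational alpha0.
Proof.
  intros z q Hq E. unfold alpha0 in E.
  assert (E1 : sqrt 2 * INR q = IZR z + INR q) by lra.
  assert (E2 : (sqrt 2 * INR q) * (sqrt 2 * INR q) = 2 * (INR q * INR q)).
  { replace ((sqrt 2 * INR q) * (sqrt 2 * INR q)) with ((sqrt 2 * sqrt 2) * (INR q * INR q))
      by ring.
    rewrite sqrt_sqrt; lra. }
  rewrite E1, INR_IZR_INZ, <- plus_IZR, <- !mult_IZR in E2. apply eq_IZR in E2.
  assert (Z.of_nat q = 0%Z) by (apply (Z_sq_eq_double_sq (z + Z.of_nat q)); lia). lia.
Qed.

Lemma nat_floor (x : R) : 0 <= x -> exists k : nat, INR k <= x < INR k + 1.
Proof.
  intros Hx. destruct (base_Int_part x) as [H1 H2].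
  assert (0 <= Int_part x)%Z.
  { apply le_IZR. destruct (Rle_lt_dec 0 (IZR (Int_part x))) as [|Hneg]; auto.
    apply lt_IZR in Hneg. assert (IZR (Int_part x) <= IZR (-1)) by (apply IZR_le; lia).
    simpl in *. lra. }
  exists (Z.to_nat (Int_part x)). rewrite INR_IZR_INZ, Z2Nat.id by lia. lra.
Qed.

Lemma nat_floor_div (s r : R) : 0 < r -> 0 <= s -> exists k : nat, INR k * r <= s < INR k * r + r.
Proof.
  intros Hr Hs. destruct (nat_floor (s / r)) as [k [Hk1 Hk2]].
  { unfold Rdiv. apply Rmult_le_pos; [lra|left; apply Rinv_0_lt_compat; lra]. }
  exists k. apply (Rmult_le_compat_r r) in Hk1; [|lra]. apply (Rmult_lt_compat_r r) in Hk2; [|lra].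
  unfold Rdiv in *. rewrite Rmult_assoc, Rinv_l in Hk1, Hk2 by lra. lra.
Qed.

Lemma exists_inv_nat_lt (eps : R) : 0 < eps -> exists N : nat, (1 <= N)%nat /\ / INR N < eps.
Proof.
  intros He. destruct (nat_floor (/ eps)) as [k Hk]; [left; apply Rinv_0_lt_compat; auto|].
  exists (S k). split; [lia|]. rewrite S_INR.
  rewrite <- (Rinv_inv eps). apply Rinv_lt_contravar; [|lra].
  apply Rmult_lt_0_compat; [apply Rinv_0_lt_compat; auto|]. pose proof (pos_INR k). lra.
Qed.

Lemma pigeonhole (N : nat) (b : nat -> nat) : (forall j, (j <= N)%nat -> (b j < N)%nat) ->
  exists j1 j2, (j1 < j2 <= N)%nat /\ b j1 = b j2.
Proof.
  revert b. induction N as [|N IH]; intros b Hb.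
  - specialize (Hb 0%nat ltac:(lia)). lia.
  - destruct (classic (exists j, (j < S N)%nat /\ b j = b (S N))) as [[j [Hj E]]|Hn].
    + exists j, (S N). split; [lia|auto].
    + assert (Hne : forall j, (j <= N)%nat -> b j <> b (S N))
        by (intros j Hj E; apply Hn; exists j; split; [lia|auto]).
      (* squeeze the value [b (S N)] out of the range *)
      set (b' := fun j => if Nat.ltb (b j) (b (S N)) then b j else pred (b j)).
      destruct (IH b') as [j1 [j2 [Hj Hb']]].
      { intros j Hj. unfold b'. pose proof (Hb j ltac:(lia)). pose proof (Hb (S N) ltac:(lia)).
        pose proof (Hne j Hj). destruct (Nat.ltb_spec (b j) (b (S N))); lia. }
      exists j1, j2. split; [lia|]. unfold b' in Hb'.
      pose proof (Hne j1 ltac:(lia)). pose proof (Hne j2 ltac:(lia)).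
      destruct (Nat.ltb_spec (b j1) (b (S N))), (Nat.ltb_spec (b j2) (b (S N))); lia.
Qed.

Lemma dirichlet_approximation (al : R) (N : nat) : irrational al -> (1 <= N)%nat ->
  exists (q : nat) (w : Z), (0 < q)%nat /\ 0 < Rabs (INR q * al - IZR w) < / INR N.
Proof.
  intros Hirr HN. assert (HNpos : 0 < INR N) by (apply lt_0_INR; lia).
  set (box := fun j => Z.to_nat (Int_part (md1 (INR j * al) * INR N))).
  assert (Hbox : forall j, INR (box j) <= md1 (INR j * al) * INR N < INR (box j) + 1).
  { intros j. pose proof (md1_bounds (INR j * al)).
    assert (0 <= md1 (INR j * al) * INR N) by (apply Rmult_le_pos; lra).
    destruct (nat_floor _ H0) as [k Hk].
    unfold box. rewrite <- (Int_part_spec _ (Z.of_nat k)), Nat2Z.id; rewrite <- ?INR_IZR_INZ; lra. }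
  destruct (pigeonhole N box) as [j1 [j2 [Hj E]]].
  { intros j Hj. pose proof (Hbox j). pose proof (md1_bounds (INR j * al)).
    assert (md1 (INR j * al) * INR N < INR N) by nra.
    apply INR_lt. lra. }
  pose proof (Hbox j1) as B1. pose proof (Hbox j2) as B2. rewrite E in B1.
  set (e := md1 (INR j2 * al) - md1 (INR j1 * al)).
  destruct (md1_sub_int (INR j1 * al)) as [w1 Hw1].
  destruct (md1_sub_int (INR j2 * al)) as [w2 Hw2].
  exists (j2 - j1)%nat, (w2 - w1)%Z. split; [lia|].
  replace (INR (j2 - j1) * al - IZR (w2 - w1)) with e
    by (unfold e; rewrite minus_INR, minus_IZR by lia; lra).
  split.
  - apply Rabs_pos_lt. intros He.
    apply (Hirr (w2 - w1)%Z (j2 - j1)%nat ltac:(lia)).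
    unfold e in He. rewrite minus_INR, minus_IZR by lia. lra.
  - apply (Rmult_lt_reg_r (INR N)); auto. rewrite Rinv_l by lra.
    rewrite <- (Rabs_right (INR N)) by lra. rewrite <- Rabs_mult.
    apply Rabs_def1; unfold e; lra.
Qed.

Lemma progression_mod1_approx (t r z : R) : 0 < r -> r <= z < 1 ->
  exists k : nat, z - r < md1 (t + INR k * r) <= z.
Proof.
  intros Hr Hz. destruct (md1_sub_int t) as [w Hw]. pose proof (md1_bounds t).
  assert (Hshift : forall k, md1 (t + INR k * r) = md1 (md1 t + INR k * r)).
  { intros k. rewrite Hw. rewrite <- (md1_add_int (t - IZR w + INR k * r) w). f_equal. ring. }
  destruct (Rle_lt_dec (md1 t) z).
  - destruct (nat_floor_div (z - md1 t) r Hr ltac:(lra)) as [k Hk].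
    exists k. rewrite Hshift, md1_small; [lra|].
    pose proof (pos_INR k). split; [nra|lra].
  - destruct (nat_floor_div (z + 1 - md1 t) r Hr ltac:(lra)) as [k Hk].
    exists k. rewrite Hshift, (md1_eq_sub _ 1); simpl; lra.
Qed.

(** The orbit of [al / 2] under the rotation by [al]; starting at [al / 2] keeps it off the
    discontinuities [0] and [1 - al] of the rotation. *)
Definition rot_orbit (al : R) (k : nat) : R := md1 ((INR k + / 2) * al).

Lemma rot_orbit_nonzero (al : R) (k : nat) : irrational al -> rot_orbit al k <> 0.
Proof.
  intros Hirr E. destruct (md1_sub_int ((INR k + / 2) * al)) as [z Hz].
  apply (Hirr (2 * z)%Z (2 * k + 1)%nat ltac:(lia)).
  unfold rot_orbit in E. rewrite E in Hz.
  rewrite mult_IZR, plus_INR, mult_INR. simpl.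
  replace (IZR z) with ((INR k + / 2) * al) by lra. field.
Qed.

Lemma rot_orbit_ne_cut (al : R) (k : nat) : irrational al -> rot_orbit al k <> 1 - al.
Proof.
  intros Hirr E. destruct (md1_sub_int ((INR k + / 2) * al)) as [z Hz].
  apply (Hirr (2 * z + 2)%Z (2 * k + 3)%nat ltac:(lia)).
  unfold rot_orbit in E. rewrite E in Hz.
  rewrite plus_IZR, mult_IZR, plus_INR, mult_INR. simpl.
  replace (IZR z) with ((INR k + / 2) * al - (1 - al)) by lra. field.
Qed.

Lemma rot_orbit_S (al : R) (k : nat) : 0 < al < 1 ->
  rot_orbit al (S k) =
  if Rlt_dec (rot_orbit al k) (1 - al) then rot_orbit al k + al else rot_orbit al k + al - 1.
Proof.
  intros Hal. unfold rot_orbit. destruct (md1_sub_int ((INR k + / 2) * al)) as [z Hz].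
  pose proof (md1_bounds ((INR k + / 2) * al)). rewrite S_INR. destruct Rlt_dec.
  - rewrite (md1_eq_sub _ z); lra.
  - rewrite (md1_eq_sub _ (z + 1)); rewrite plus_IZR; lra.
Qed.

Lemma rot_orbit_dense (al z eps : R) : irrational al -> 0 < z < 1 -> 0 < eps ->
  exists k : nat, Rabs (rot_orbit al k - z) < eps.
Proof.
  intros Hirr Hz He.
  assert (He1 : 0 < Rmin eps (Rmin z (1 - z))) by (repeat apply Rmin_glb_lt; lra).
  destruct (exists_inv_nat_lt _ He1) as [N [HN HNe]].
  pose proof (Rmin_l eps (Rmin z (1 - z))). pose proof (Rmin_r eps (Rmin z (1 - z))).
  pose proof (Rmin_l z (1 - z)). pose proof (Rmin_r z (1 - z)).
  destruct (dirichlet_approximation al N Hirr HN) as [q [w [Hq Hr]]].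
  set (r := INR q * al - IZR w) in *.
  assert (Hstep : forall k, rot_orbit al (k * q) = md1 (al / 2 + INR k * r)).
  { intros k. unfold rot_orbit, r. symmetry. rewrite <- (md1_add_int _ (Z.of_nat k * w)).
    f_equal. rewrite mult_IZR, <- INR_IZR_INZ, mult_INR. field. }
  destruct (Rle_lt_dec 0 r) as [Hpos|Hneg].
  - rewrite Rabs_right in Hr by lra.
    destruct (progression_mod1_approx (al / 2) r z) as [k Hk]; [lra|lra|].
    exists (k * q)%nat. rewrite Hstep. apply Rabs_def1; lra.
  - rewrite Rabs_left in Hr by lra.
    destruct (progression_mod1_approx (- (al / 2)) (- r) (1 - z)) as [k Hk]; [lra|lra|].
    exists (k * q)%nat. rewrite Hstep.
    replace (al / 2 + INR k * r) with (- (- (al / 2) + INR k * - r)) by ring.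
    rewrite md1_opp by lra. apply Rabs_def1; lra.
Qed.

(** * Towers over an irrational rotation are transitive *)

Lemma fwd_app (Dm : R -> Prop) (T : R -> R) (a b : nat) (p q r : R) :
  fwd Dm T a p q -> fwd Dm T b q r -> fwd Dm T (b + a) p r.
Proof.
  revert r. induction b as [|b IH]; intros r H1 H2.
  - simpl in *. subst. auto.
  - destruct H2 as [s [Hs [Ds E]]]. exists s. split; [apply (IH s H1 Hs)|auto].
Qed.

Definition interval_rotation (L be x : R) : R :=
  if Rlt_dec x (L - be) then x + be else x + be - L.

Lemma rot_orbit_bounds (al : R) (k : nat) : irrational al -> 0 < rot_orbit al k < 1.
Proof.
  intros Hirr. pose proof (md1_bounds ((INR k + / 2) * al)).
  pose proof (rot_orbit_nonzero al k Hirr).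
  unfold rot_orbit in *. lra.
Qed.

Lemma rot_orbit_scaled_S (al L : R) (k : nat) : 0 < L -> 0 < al < 1 ->
  L * rot_orbit al (S k) = interval_rotation L (al * L) (L * rot_orbit al k).
Proof.
  intros HL Hal. unfold interval_rotation. rewrite (rot_orbit_S al k Hal).
  pose proof (md1_bounds ((INR k + / 2) * al)). unfold rot_orbit in *.
  destruct (Rlt_dec (L * md1 ((INR k + / 2) * al)) (L - al * L));
    destruct (Rlt_dec (md1 ((INR k + / 2) * al)) (1 - al)); try ring; exfalso; nra.
Qed.

(* [Psi j x] is the point at height [j] above the point [x] of the base [(0, L)] of a tower of
   height [m]; the first return to the base is the rotation by [al L]. *)
Lemma tower_transitive (Dm : R -> Prop) (T : R -> R) (m : nat) (L al : R)
    (Psi : nat -> R -> R) :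
  0 < L -> 0 < al < 1 -> irrational al ->
  (forall x, 0 < x < L -> in_circle (Psi 0%nat x)) ->
  (forall x, 0 < x < L -> x <> L - al * L ->
     fwd Dm T m (Psi 0%nat x) (Psi 0%nat (interval_rotation L (al * L) x))) ->
  (forall j x, (j < m)%nat -> 0 < x < L -> fwd Dm T j (Psi 0%nat x) (Psi j x)) ->
  (forall j x y, (j < m)%nat -> Rabs (Psi j x - Psi j y) = Rabs (x - y)) ->
  (forall y eps, in_circle y -> 0 < eps ->
     exists j x, (j < m)%nat /\ 0 < x < L /\ cdist y (Psi j x) < eps) ->
  transitive Dm T.
Proof.
  intros HL Hal Hirr Hcirc Hret Hup Hiso Hcov.
  set (xk := fun k : nat => L * rot_orbit al k).
  assert (Hxk : forall k, 0 < xk k < L)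
    by (intros k; pose proof (rot_orbit_bounds al k Hirr); unfold xk; split; nra).
  assert (Hfk : forall k, fwd Dm T (k * m) (Psi 0%nat (xk 0%nat)) (Psi 0%nat (xk k))).
  { induction k as [|k IH]; [reflexivity|].
    replace (S k * m)%nat with (m + k * m)%nat by lia.
    apply (fwd_app _ _ _ _ _ (Psi 0%nat (xk k))); auto.
    unfold xk. rewrite rot_orbit_scaled_S by auto. apply Hret; [apply Hxk|].
    intros E. apply (rot_orbit_ne_cut al k Hirr). apply (Rmult_eq_reg_l L); lra. }
  exists (Psi 0%nat (xk 0%nat)). split; [apply Hcirc, Hxk|].
  intros y eps Hy He.
  destruct (Hcov y (eps / 2) Hy ltac:(lra)) as [j [x [Hj [Hx Hc]]]].
  destruct (rot_orbit_dense al (x / L) (eps / 2 / L)) as [k Hk]; auto.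
  { split; [apply Rdiv_lt_0_compat; lra|].
    apply (Rmult_lt_reg_r L); [lra|]. unfold Rdiv. rewrite Rmult_assoc, Rinv_l; lra. }
  { apply Rdiv_lt_0_compat; lra. }
  exists (Psi j (xk k)). split.
  - exists (j + k * m)%nat. left. apply (fwd_app _ _ _ _ _ (Psi 0%nat (xk k))); auto.
  - assert (Rabs (xk k - x) < eps / 2).
    { unfold xk. replace (L * rot_orbit al k - x) with (L * (rot_orbit al k - x / L))
        by (field; lra).
      rewrite Rabs_mult, Rabs_right by lra.
      apply (Rmult_lt_compat_l L) in Hk; [|lra].
      replace (L * (eps / 2 / L)) with (eps / 2) in Hk by (field; lra). lra. }
    pose proof (cdist_le_abs (Psi j (xk k)) (Psi j x)). rewrite Hiso in * by auto.
    pose proof (cdist_triangle (Psi j (xk k)) (Psi j x) y).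
    rewrite (cdist_sym (Psi j x) y) in *. lra.
Qed.

(** * Towers *)

(* The circle is cut into [height tw = m] slots [(p/m, (p+1)/m)]. Level [j] of the tower fills
   slot [slot tw j] ([level tw] is the inverse permutation), and the map sends level [j] onto
   level [j+1], reversing the orientation iff [twist tw j], for [j < m - 1]. The top level, which
   fills the last slot, is sent onto level [0] by the rotation by [alpha0 / m] of that slot,
   composed with a reflection when the total number of twists is odd; this splits the top slot
   into two pieces. When [merged tw], slots [0] and [1] form a single piece. *)
Record tower := mk_tower {
  height : nat;
  slot : nat -> nat;
  level : nat -> nat;
  twist : nat -> bool;
  merged : bool }.

Definition next_slot (tw : tower) (p : nat) : nat := slot tw (S (level tw p)).
Definition slot_twist (tw : tower) (p : nat) : bool := twist tw (level tw p).

Fixpoint twist_parity (tw : tower) (j : nat) : bool :=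
  match j with O => false | S k => xorb (twist_parity tw k) (twist tw k) end.

Definition top_twist (tw : tower) : bool := twist_parity tw (pred (height tw)).
Definition offset (tw : tower) : nat := if merged tw then 1%nat else 0%nat.
Definition slot_len (tw : tower) : R := / INR (height tw).
Definition top_shift (tw : tower) : R := alpha0 * slot_len tw.
Definition base_slot (tw : tower) : nat := slot tw 0.

Definition top_left_len (tw : tower) : R :=
  if top_twist tw then top_shift tw else slot_len tw - top_shift tw.
Definition top_right_len (tw : tower) : R :=
  if top_twist tw then slot_len tw - top_shift tw else top_shift tw.

(* Piece [i] of the exchange covers the slots [first_slot tw i] to [last_slot tw i]. *)
Definition first_slot (tw : tower) (i : nat) : nat :=
  if Nat.eqb i 0 then 0%nat else (i + offset tw)%nat.
Definition last_slot (tw : tower) (i : nat) : nat :=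
  if Nat.eqb i 0 then offset tw else (i + offset tw)%nat.

(* The slot boundaries (in units of [1/m]) onto which the right and left ends of slot [p] go. *)
Definition end_image (tw : tower) (p : nat) : nat :=
  if slot_twist tw p then next_slot tw p else S (next_slot tw p).
Definition start_image (tw : tower) (p : nat) : nat :=
  if slot_twist tw p then S (next_slot tw p) else next_slot tw p.

Definition distinct_mod (m a b : nat) : Prop := a <> b /\ a <> (b + m)%nat /\ b <> (a + m)%nat.

Definition tower_left (tw : tower) (i : nat) : R :=
  if Nat.ltb (i + offset tw) (pred (height tw)) then INR (first_slot tw i) * slot_len tw
  else if Nat.eqb (i + offset tw) (pred (height tw)) then INR (pred (height tw)) * slot_len tw
  else INR (pred (height tw)) * slot_len tw + top_left_len tw.

Definition tower_width (tw : tower) (i : nat) : R :=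
  if Nat.ltb (i + offset tw) (pred (height tw))
  then INR (S (last_slot tw i) - first_slot tw i) * slot_len tw
  else if Nat.eqb (i + offset tw) (pred (height tw)) then top_left_len tw else top_right_len tw.

Definition tower_target (tw : tower) (i : nat) : R :=
  if Nat.ltb (i + offset tw) (pred (height tw))
  then INR (next_slot tw (last_slot tw i)) * slot_len tw
  else if Nat.eqb (i + offset tw) (pred (height tw))
  then INR (base_slot tw) * slot_len tw + (if top_twist tw then 0 else top_shift tw)
  else INR (base_slot tw) * slot_len tw + (if top_twist tw then top_shift tw else 0).

Definition tower_flip (tw : tower) (i : nat) : bool :=
  if Nat.ltb (i + offset tw) (pred (height tw)) then slot_twist tw (last_slot tw i)
  else top_twist tw.

Definition tower_cet (tw : tower) : cet_data :=
  mk_cet_data (height tw + 1 - offset tw) (tower_left tw) (tower_width tw) (tower_target tw)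
    (tower_flip tw).

Record tower_ok (tw : tower) : Prop := {
  tw_height_ge3 : (3 <= height tw)%nat;
  tw_slot_bij : forall j, (j < height tw)%nat ->
    (slot tw j < height tw)%nat /\ level tw (slot tw j) = j;
  tw_level_bij : forall p, (p < height tw)%nat ->
    (level tw p < height tw)%nat /\ slot tw (level tw p) = p;
  tw_top_slot : slot tw (pred (height tw)) = pred (height tw);
  tw_merge : merged tw = true ->
    slot_twist tw 0 = true /\ slot_twist tw 1 = true /\ next_slot tw 0 = S (next_slot tw 1);
  tw_jumps : forall p, (S p < pred (height tw))%nat -> (merged tw = true -> p <> 0%nat) ->
    distinct_mod (height tw) (end_image tw p) (start_image tw (S p)) }.

Lemma offset_le1 (tw : tower) : (offset tw <= 1)%nat.
Proof. unfold offset. destruct (merged tw); lia. Qed.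

Lemma first_last_slot (tw : tower) (i : nat) :
  (first_slot tw i <= last_slot tw i)%nat /\ (last_slot tw i <= i + offset tw)%nat.
Proof. unfold first_slot, last_slot. destruct (Nat.eqb_spec i 0); lia. Qed.

Lemma first_ne_last_slot (tw : tower) (i : nat) : first_slot tw i <> last_slot tw i ->
  i = 0%nat /\ merged tw = true /\ first_slot tw i = 0%nat /\ last_slot tw i = 1%nat.
Proof.
  unfold first_slot, last_slot, offset. intros H. destruct (Nat.eqb_spec i 0); [|lia].
  destruct (merged tw); [|lia]. auto.
Qed.

Lemma top_len_sum (tw : tower) : top_left_len tw + top_right_len tw = slot_len tw.
Proof. unfold top_left_len, top_right_len. destruct (top_twist tw); ring. Qed.

Lemma tower_view_slot (tw : tower) (i : nat) : (i + offset tw < pred (height tw))%nat ->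
  tower_left tw i = INR (first_slot tw i) * slot_len tw /\
  tower_width tw i = INR (S (last_slot tw i) - first_slot tw i) * slot_len tw /\
  tower_target tw i = INR (next_slot tw (last_slot tw i)) * slot_len tw /\
  tower_flip tw i = slot_twist tw (last_slot tw i).
Proof.
  intros H. unfold tower_left, tower_width, tower_target, tower_flip.
  destruct (Nat.ltb_spec (i + offset tw) (pred (height tw))); [auto|lia].
Qed.

Lemma tower_view_top_left (tw : tower) (i : nat) : (i + offset tw = pred (height tw))%nat ->
  tower_left tw i = INR (pred (height tw)) * slot_len tw /\ tower_width tw i = top_left_len tw /\
  tower_target tw i =
    INR (base_slot tw) * slot_len tw + (if top_twist tw then 0 else top_shift tw) /\
  tower_flip tw i = top_twist tw.
Proof.
  intros H. unfold tower_left, tower_width, tower_target, tower_flip.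
  destruct (Nat.ltb_spec (i + offset tw) (pred (height tw))); [lia|].
  destruct (Nat.eqb_spec (i + offset tw) (pred (height tw))); [auto|lia].
Qed.

Lemma tower_view_top_right (tw : tower) (i : nat) :
  (i + offset tw = height tw)%nat -> (1 <= height tw)%nat ->
  tower_left tw i = INR (pred (height tw)) * slot_len tw + top_left_len tw /\
  tower_width tw i = top_right_len tw /\
  tower_target tw i =
    INR (base_slot tw) * slot_len tw + (if top_twist tw then top_shift tw else 0) /\
  tower_flip tw i = top_twist tw.
Proof.
  intros H H1. unfold tower_left, tower_width, tower_target, tower_flip.
  destruct (Nat.ltb_spec (i + offset tw) (pred (height tw))); [lia|].
  destruct (Nat.eqb_spec (i + offset tw) (pred (height tw))); [lia|auto].
Qed.

Definition count_range (f : nat -> bool) (a k : nat) : nat := length (filter f (seq a k)).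

Lemma count_range_S (f : nat -> bool) (a k : nat) :
  count_range f a (S k) = (count_range f a k + if f (a + k)%nat then 1 else 0)%nat.
Proof.
  unfold count_range. rewrite seq_S, filter_app, length_app. simpl.
  destruct (f (a + k)%nat); reflexivity.
Qed.

Lemma count_range_ext (f g : nat -> bool) (a k : nat) :
  (forall i, (a <= i < a + k)%nat -> f i = g i) -> count_range f a k = count_range g a k.
Proof.
  intros H. induction k as [|k IH]; [reflexivity|].
  rewrite !count_range_S, IH by (intros; apply H; lia). rewrite H by lia. reflexivity.
Qed.

Lemma count_range_shift (f : nat -> bool) (a c k : nat) :
  count_range (fun i => f (i + c)%nat) a k = count_range f (a + c) k.
Proof.
  induction k as [|k IH]; [reflexivity|].
  rewrite !count_range_S, IH. replace (a + k + c)%nat with (a + c + k)%nat by lia. reflexivity.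
Qed.

Lemma count_range_add (f : nat -> bool) (a k1 k2 : nat) :
  count_range f a (k1 + k2) = (count_range f a k1 + count_range f (a + k1) k2)%nat.
Proof.
  induction k2 as [|k2 IH].
  { rewrite Nat.add_0_r. change (count_range f (a + k1) 0) with 0%nat. lia. }
  rewrite Nat.add_succ_r, !count_range_S, IH.
  replace (a + (k1 + k2))%nat with (a + k1 + k2)%nat by lia.
  lia.
Qed.

Lemma count_range_all (f : nat -> bool) (a k : nat) :
  (forall i, (a <= i < a + k)%nat -> f i = true) -> count_range f a k = k.
Proof.
  intros H. induction k as [|k IH]; [reflexivity|].
  rewrite count_range_S, IH by (intros; apply H; lia). rewrite H by lia. lia.
Qed.

Lemma count_range_none (f : nat -> bool) (a k : nat) :
  (forall i, (a <= i < a + k)%nat -> f i = false) -> count_range f a k = 0%nat.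
Proof.
  intros H. induction k as [|k IH]; [reflexivity|].
  rewrite count_range_S, IH by (intros; apply H; lia). rewrite H by lia. lia.
Qed.

Lemma Permutation_filter_length (A : Type) (f : A -> bool) (l l' : list A) :
  Permutation l l' -> length (filter f l) = length (filter f l').
Proof.
  intros H. induction H; simpl; auto.
  - destruct (f x); simpl; auto.
  - destruct (f x), (f y); reflexivity.
  - congruence.
Qed.

Lemma twist_parity_count (tw : tower) (j : nat) :
  twist_parity tw j = Nat.odd (count_range (twist tw) 0 j).
Proof.
  induction j as [|j IH]; [reflexivity|].
  simpl twist_parity. rewrite IH, count_range_S. simpl (0 + j)%nat.
  destruct (twist tw j); [rewrite Nat.add_1_r, Nat.odd_succ, <- Nat.negb_odd|rewrite Nat.add_0_r];
    destruct (Nat.odd _); reflexivity.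
Qed.

Section Tower.

Variable tw : tower.

Local Notation m := (height tw).
Local Notation L := (slot_len tw).
Local Notation off := (offset tw).

Hypothesis height_ge3 : (3 <= m)%nat.
Hypothesis slot_bij : forall j, (j < m)%nat -> (slot tw j < m)%nat /\ level tw (slot tw j) = j.
Hypothesis level_bij : forall p, (p < m)%nat -> (level tw p < m)%nat /\ slot tw (level tw p) = p.
Hypothesis top_slot : slot tw (pred m) = pred m.
Hypothesis merge_ok : merged tw = true ->
  slot_twist tw 0 = true /\ slot_twist tw 1 = true /\ next_slot tw 0 = S (next_slot tw 1).
Hypothesis jumps_ok : forall p, (S p < pred m)%nat -> (merged tw = true -> p <> 0%nat) ->
  distinct_mod m (end_image tw p) (start_image tw (S p)).

Lemma slot_len_pos : 0 < L.
Proof. apply Rinv_0_lt_compat, lt_0_INR. lia. Qed.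

Lemma height_mul_slot_len : INR m * L = 1.
Proof. apply Rinv_r, not_0_INR. lia. Qed.

Lemma slot_len_lt1 : L < 1.
Proof.
  pose proof height_mul_slot_len. pose proof slot_len_pos.
  assert (3 <= INR m) by (replace 3 with (INR 3) by (simpl; lra); apply le_INR; lia). nra.
Qed.

Lemma top_shift_bounds : 0 < top_shift tw < L.
Proof. pose proof slot_len_pos. pose proof alpha0_bounds. unfold top_shift. split; nra. Qed.

Lemma top_lens_pos : 0 < top_left_len tw /\ 0 < top_right_len tw.
Proof.
  pose proof top_shift_bounds. unfold top_left_len, top_right_len. destruct (top_twist tw); lra.
Qed.

Lemma slot_le (a b : nat) : (a <= b)%nat -> INR a * L <= INR b * L.
Proof. intros. apply Rmult_le_compat_r; [left; apply slot_len_pos|apply le_INR; auto]. Qed.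

Lemma slot_inj (a b : nat) : INR a * L = INR b * L -> a = b.
Proof. intros E. pose proof slot_len_pos. apply INR_eq, (Rmult_eq_reg_r L); lra. Qed.

Lemma slot_injective (a b : nat) : (a < m)%nat -> (b < m)%nat -> slot tw a = slot tw b -> a = b.
Proof.
  intros Ha Hb E. rewrite <- (proj2 (slot_bij a Ha)), <- (proj2 (slot_bij b Hb)), E. reflexivity.
Qed.

Lemma level_below_top (p : nat) : (p < m)%nat -> p <> pred m -> (level tw p < pred m)%nat.
Proof.
  intros Hp Hne. destruct (level_bij p Hp) as [Hl He].
  destruct (Nat.eq_dec (level tw p) (pred m)) as [E|]; [|lia].
  exfalso. apply Hne. rewrite <- He, E, top_slot. reflexivity.
Qed.

Lemma next_slot_lt (p : nat) : (p < m)%nat -> p <> pred m -> (next_slot tw p < m)%nat.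
Proof. intros Hp Hne. pose proof (level_below_top p Hp Hne). apply slot_bij. lia. Qed.

Lemma next_slot_ne_base (p : nat) : (p < m)%nat -> p <> pred m -> next_slot tw p <> base_slot tw.
Proof.
  intros Hp Hne E. pose proof (level_below_top p Hp Hne).
  apply slot_injective in E; lia.
Qed.

Lemma next_slot_injective (p q : nat) : (p < m)%nat -> p <> pred m -> (q < m)%nat -> q <> pred m ->
  next_slot tw p = next_slot tw q -> p = q.
Proof.
  intros Hp Hnp Hq Hnq E.
  pose proof (level_below_top p Hp Hnp). pose proof (level_below_top q Hq Hnq).
  apply slot_injective in E; [|lia|lia].
  rewrite <- (proj2 (level_bij p Hp)), <- (proj2 (level_bij q Hq)). f_equal. lia.
Qed.

Lemma base_slot_lt : (base_slot tw < m)%nat.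
Proof. apply slot_bij. lia. Qed.

Lemma tower_left_S (i : nat) : (S i < m + 1 - off)%nat ->
  tower_left tw (S i) = tower_left tw i + tower_width tw i.
Proof.
  intros Hi. pose proof (offset_le1 tw). pose proof (first_last_slot tw i).
  destruct (Nat.lt_ge_cases (i + off) (pred m)) as [Hlt|Hge].
  - destruct (tower_view_slot tw i Hlt) as (-> & -> & _).
    rewrite <- Rmult_plus_distr_r, <- plus_INR.
    destruct (Nat.lt_ge_cases (S i + off) (pred m)).
    + destruct (tower_view_slot tw (S i) H1) as (-> & _).
      do 2 f_equal. destruct i; unfold first_slot, last_slot in *; cbn [Nat.eqb] in *; lia.
    + destruct (tower_view_top_left tw (S i) ltac:(lia)) as (-> & _).
      do 2 f_equal. destruct i; unfold first_slot, last_slot in *; cbn [Nat.eqb] in *; lia.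
  - destruct (tower_view_top_left tw i ltac:(lia)) as (-> & -> & _).
    destruct (tower_view_top_right tw (S i) ltac:(lia) ltac:(lia)) as (-> & _). reflexivity.
Qed.

Lemma tower_left_last :
  tower_left tw (pred (m + 1 - off)) + tower_width tw (pred (m + 1 - off)) = 1.
Proof.
  pose proof (offset_le1 tw).
  destruct (tower_view_top_right tw (pred (m + 1 - off)) ltac:(lia) ltac:(lia)) as (-> & -> & _).
  pose proof (top_len_sum tw). rewrite <- height_mul_slot_len.
  replace m with (S (pred m)) at 2 by lia. rewrite S_INR. lra.
Qed.

Lemma merged_first_slot (i : nat) : first_slot tw i <> last_slot tw i ->
  slot_twist tw (last_slot tw i) = true /\ slot_twist tw (first_slot tw i) = true /\
  next_slot tw (first_slot tw i) = S (next_slot tw (last_slot tw i)).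
Proof.
  intros E. destruct (first_ne_last_slot tw i E) as (_ & Hm & -> & ->).
  destruct (merge_ok Hm) as (A & B & C). auto.
Qed.

Lemma slot_piece_target_cover (i k : nat) : (i + off < pred m)%nat ->
  (next_slot tw (last_slot tw i) <= k <
     next_slot tw (last_slot tw i) + (S (last_slot tw i) - first_slot tw i))%nat ->
  exists p, (first_slot tw i <= p <= last_slot tw i)%nat /\ k = next_slot tw p.
Proof.
  intros Hi Hk. pose proof (first_last_slot tw i).
  destruct (Nat.eq_dec (first_slot tw i) (last_slot tw i)) as [E|E].
  - exists (last_slot tw i). split; [lia|]. rewrite E in Hk. lia.
  - pose proof (merged_first_slot i E) as (_ & _ & Hs).
    destruct (first_ne_last_slot tw i E) as (_ & _ & E1 & E2). rewrite E1, E2 in *.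
    destruct (Nat.eq_dec k (next_slot tw 1)); [exists 1%nat|exists 0%nat]; split; lia.
Qed.

Lemma slot_piece_target_bound (i : nat) : (i + off < pred m)%nat ->
  (next_slot tw (last_slot tw i) + (S (last_slot tw i) - first_slot tw i) <= m)%nat.
Proof.
  intros Hi. pose proof (first_last_slot tw i).
  destruct (Nat.eq_dec (first_slot tw i) (last_slot tw i)) as [E|E].
  - rewrite E. pose proof (next_slot_lt (last_slot tw i) ltac:(lia) ltac:(lia)). lia.
  - pose proof (merged_first_slot i E) as (_ & _ & Hs).
    destruct (first_ne_last_slot tw i E) as (_ & _ & E1 & E2). rewrite E1, E2 in *.
    pose proof (next_slot_lt 0 ltac:(lia) ltac:(lia)). lia.
Qed.

Lemma slot_piece_targets_disjoint (i j : nat) : (i + off < pred m)%nat -> (j + off < pred m)%nat ->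
  i <> j -> forall k,
  (next_slot tw (last_slot tw i) <= k <
     next_slot tw (last_slot tw i) + (S (last_slot tw i) - first_slot tw i))%nat ->
  (next_slot tw (last_slot tw j) <= k <
     next_slot tw (last_slot tw j) + (S (last_slot tw j) - first_slot tw j))%nat -> False.
Proof.
  intros Hi Hj Hne k Ki Kj.
  destruct (slot_piece_target_cover i k Hi Ki) as [p [Hp ->]].
  destruct (slot_piece_target_cover j _ Hj Kj) as [q [Hq Eq]].
  pose proof (first_last_slot tw i). pose proof (first_last_slot tw j).
  apply next_slot_injective in Eq; try lia. subst q.
  unfold first_slot, last_slot in *. pose proof (offset_le1 tw).
  destruct (Nat.eqb_spec i 0), (Nat.eqb_spec j 0); lia.
Qed.

Lemma nat_intervals_apart (s1 w1 s2 w2 : nat) :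
  (forall k, (s1 <= k < s1 + w1)%nat -> (s2 <= k < s2 + w2)%nat -> False) ->
  (0 < w1)%nat -> (0 < w2)%nat -> (s1 + w1 <= s2 \/ s2 + w2 <= s1)%nat.
Proof.
  intros H H1 H2.
  destruct (Nat.le_gt_cases (s1 + w1) s2); [left; auto|].
  destruct (Nat.le_gt_cases (s2 + w2) s1); [right; auto|].
  exfalso. apply (H (Nat.max s1 s2)); lia.
Qed.

Lemma apart_sym (a v b w : R) : apart a v b w -> apart b w a v.
Proof. unfold apart. tauto. Qed.

Lemma apart_sub (a v b w c u : R) : apart a v c u -> c <= b -> b + w <= c + u -> apart a v b w.
Proof. unfold apart. lra. Qed.

Lemma apart_slots (a v b w : nat) : (a + v <= b \/ b + w <= a)%nat ->
  apart (INR a * L) (INR v * L) (INR b * L) (INR w * L).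
Proof.
  unfold apart. rewrite <- !Rmult_plus_distr_r, <- !plus_INR.
  intros [H|H]; [left|right]; apply slot_le, H.
Qed.

Local Notation N := (m + 1 - off)%nat.

Lemma tower_piece_cases (i : nat) : (i < N)%nat ->
  (i + off < pred m)%nat \/ (i + off = pred m)%nat \/ (i + off = m)%nat.
Proof. pose proof (offset_le1 tw). lia. Qed.

Lemma tower_width_pos (i : nat) : (i < N)%nat -> 0 < tower_width tw i.
Proof.
  intros Hi. pose proof top_lens_pos. destruct (tower_piece_cases i Hi) as [K|[K|K]].
  - destruct (tower_view_slot tw i K) as (_ & -> & _). pose proof (first_last_slot tw i).
    apply Rmult_lt_0_compat; [apply lt_0_INR; lia|apply slot_len_pos].
  - destruct (tower_view_top_left tw i K) as (_ & -> & _). tauto.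
  - destruct (tower_view_top_right tw i K ltac:(lia)) as (_ & -> & _). tauto.
Qed.

Lemma top_piece_target_in_base_slot (i : nat) : (i < N)%nat -> (pred m <= i + off)%nat ->
  INR (base_slot tw) * L <= tower_target tw i /\
  tower_target tw i + tower_width tw i <= INR (base_slot tw) * L + INR 1 * L.
Proof.
  intros Hi Hk. pose proof top_shift_bounds. simpl INR. rewrite Rmult_1_l.
  destruct (tower_piece_cases i Hi) as [K|[K|K]]; [lia| |].
  - destruct (tower_view_top_left tw i K) as (_ & -> & -> & _).
    unfold top_left_len. destruct (top_twist tw); lra.
  - destruct (tower_view_top_right tw i K ltac:(lia)) as (_ & -> & -> & _).
    unfold top_right_len. destruct (top_twist tw); lra.
Qed.

Lemma slot_piece_target_apart_base (i : nat) : (i + off < pred m)%nat ->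
  apart (tower_target tw i) (tower_width tw i) (INR (base_slot tw) * L) (INR 1 * L).
Proof.
  intros Hi. destruct (tower_view_slot tw i Hi) as (_ & -> & -> & _).
  pose proof (first_last_slot tw i). apply apart_slots, nat_intervals_apart; try lia.
  intros k Kt Kb. destruct (slot_piece_target_cover i k Hi Kt) as [p [Hp ->]].
  apply (next_slot_ne_base p); lia.
Qed.

Lemma tower_targets_apart (i j : nat) : (i < N)%nat -> (j < N)%nat -> i <> j ->
  apart (tower_target tw i) (tower_width tw i) (tower_target tw j) (tower_width tw j).
Proof.
  intros Hi Hj Hne.
  destruct (Nat.lt_ge_cases (i + off) (pred m)) as [Ki|Ki];
  destruct (Nat.lt_ge_cases (j + off) (pred m)) as [Kj|Kj].
  - destruct (tower_view_slot tw i Ki) as (_ & -> & -> & _).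
    destruct (tower_view_slot tw j Kj) as (_ & -> & -> & _).
    pose proof (first_last_slot tw i). pose proof (first_last_slot tw j).
    apply apart_slots, nat_intervals_apart; [|lia|lia].
    apply (slot_piece_targets_disjoint i j Ki Kj Hne).
  - pose proof (top_piece_target_in_base_slot j Hj Kj).
    apply (apart_sub _ _ _ _ _ _ (slot_piece_target_apart_base i Ki)); tauto.
  - pose proof (top_piece_target_in_base_slot i Hi Ki). apply apart_sym.
    apply (apart_sub _ _ _ _ _ _ (slot_piece_target_apart_base j Kj)); tauto.
  - pose proof top_shift_bounds. unfold apart.
    destruct (tower_piece_cases i Hi) as [K|[K|K]]; [lia| |];
    destruct (tower_piece_cases j Hj) as [K'|[K'|K']]; try lia.
    + destruct (tower_view_top_left tw i K) as (_ & -> & -> & _).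
      destruct (tower_view_top_right tw j K' ltac:(lia)) as (_ & -> & -> & _).
      unfold top_left_len, top_right_len. destruct (top_twist tw); lra.
    + destruct (tower_view_top_right tw i K ltac:(lia)) as (_ & -> & -> & _).
      destruct (tower_view_top_left tw j K') as (_ & -> & -> & _).
      unfold top_left_len, top_right_len. destruct (top_twist tw); lra.
Qed.

Lemma tower_target_bounds (i : nat) : (i < N)%nat ->
  0 <= tower_target tw i /\ tower_target tw i + tower_width tw i <= 1.
Proof.
  intros Hi. pose proof base_slot_lt. pose proof slot_len_pos.
  assert (Hbase : INR (base_slot tw) * L + INR 1 * L <= 1).
  { rewrite <- height_mul_slot_len, <- Rmult_plus_distr_r, <- plus_INR. apply slot_le. lia. }
  assert (0 <= INR (base_slot tw) * L) by (apply Rmult_le_pos; [apply pos_INR|lra]).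
  destruct (Nat.lt_ge_cases (i + off) (pred m)) as [K|K].
  - pose proof (slot_piece_target_bound i K).
    destruct (tower_view_slot tw i K) as (_ & -> & -> & _). split.
    + apply Rmult_le_pos; [apply pos_INR|lra].
    + rewrite <- Rmult_plus_distr_r, <- plus_INR, <- height_mul_slot_len. apply slot_le. lia.
  - pose proof (top_piece_target_in_base_slot i Hi K). lra.
Qed.

Lemma distinct_mod1_slots (a b : nat) : distinct_mod m a b -> distinct_mod1 (INR a * L) (INR b * L).
Proof.
  intros (H1 & H2 & H3). pose proof height_mul_slot_len. repeat split; intros E.
  - apply H1, slot_inj. auto.
  - apply H2, slot_inj. rewrite plus_INR. lra.
  - apply H3, slot_inj. rewrite plus_INR. lra.
Qed.

(* a slot boundary is never a shifted slot boundary, [alpha0] being irrational *)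
Lemma distinct_mod1_shifted (b k : nat) :
  distinct_mod1 (INR b * L + top_shift tw) (INR k * L) /\
  distinct_mod1 (INR k * L) (INR b * L + top_shift tw).
Proof.
  pose proof height_mul_slot_len. pose proof slot_len_pos. pose proof alpha0_bounds.
  assert (Hc : forall c : Z, alpha0 * L <> IZR c * L).
  { intros c E. apply Rmult_eq_reg_r in E; [|lra]. apply (IZR_between_0_1 c). lra. }
  rewrite !INR_IZR_INZ in *. unfold top_shift, distinct_mod1. repeat split; intro E.
  - apply (Hc (Z.of_nat k - Z.of_nat b)%Z). rewrite minus_IZR. lra.
  - apply (Hc (Z.of_nat m + Z.of_nat k - Z.of_nat b)%Z). rewrite minus_IZR, plus_IZR. lra.
  - apply (Hc (Z.of_nat k - Z.of_nat m - Z.of_nat b)%Z). rewrite !minus_IZR. lra.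
  - apply (Hc (Z.of_nat k - Z.of_nat b)%Z). rewrite minus_IZR. lra.
  - apply (Hc (Z.of_nat k - Z.of_nat m - Z.of_nat b)%Z). rewrite !minus_IZR. lra.
  - apply (Hc (Z.of_nat m + Z.of_nat k - Z.of_nat b)%Z). rewrite minus_IZR, plus_IZR. lra.
Qed.

Lemma image_right_end_slot_piece (i : nat) : (i + off < pred m)%nat ->
  image_right_end (tower_cet tw) i = INR (end_image tw (last_slot tw i)) * L.
Proof.
  intros Hi. destruct (tower_view_slot tw i Hi) as (_ & A2 & A3 & A4).
  unfold image_right_end, end_image. simpl. rewrite A2, A3, A4. pose proof (first_last_slot tw i).
  destruct (Nat.eq_dec (first_slot tw i) (last_slot tw i)) as [E|E].
  - rewrite E, Nat.sub_succ_l, Nat.sub_diag by lia.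
    rewrite INR_1. destruct (slot_twist tw (last_slot tw i)); [ring|rewrite S_INR; ring].
  - destruct (merged_first_slot i E) as (-> & _). reflexivity.
Qed.

Lemma image_left_end_slot_piece (i : nat) : (i + off < pred m)%nat ->
  image_left_end (tower_cet tw) i = INR (start_image tw (first_slot tw i)) * L.
Proof.
  intros Hi. destruct (tower_view_slot tw i Hi) as (_ & A2 & A3 & A4).
  unfold image_left_end, start_image. simpl. rewrite A2, A3, A4. pose proof (first_last_slot tw i).
  destruct (Nat.eq_dec (first_slot tw i) (last_slot tw i)) as [E|E].
  - rewrite E, Nat.sub_succ_l, Nat.sub_diag by lia.
    rewrite INR_1. destruct (slot_twist tw (last_slot tw i)); [rewrite S_INR; ring|ring].
  - destruct (merged_first_slot i E) as (F1 & F2 & F3). rewrite F1, F2, F3.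
    destruct (first_ne_last_slot tw i E) as (_ & _ & -> & ->). rewrite !S_INR. simpl. ring.
Qed.

Lemma tower_cet_jumps (i : nat) : (i < N)%nat ->
  distinct_mod1 (image_right_end (tower_cet tw) (prev_piece (tower_cet tw) i))
    (image_left_end (tower_cet tw) i).
Proof.
  intros Hi. pose proof (offset_le1 tw). destruct i as [|k].
  - simpl. destruct (tower_view_top_right tw (pred N) ltac:(lia) ltac:(lia)) as (_ & A2 & A3 & A4).
    replace (image_right_end (tower_cet tw) (pred N)) with (INR (base_slot tw) * L + top_shift tw)
      by (unfold image_right_end; simpl; rewrite A2, A3, A4; unfold top_right_len;
          destruct (top_twist tw); ring).
    rewrite (image_left_end_slot_piece 0 ltac:(lia)). apply distinct_mod1_shifted.
  - simpl prev_piece. destruct (tower_piece_cases (S k) Hi) as [K|[K|K]].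
    + rewrite (image_right_end_slot_piece k ltac:(lia)), (image_left_end_slot_piece (S k) K).
      apply distinct_mod1_slots.
      replace (first_slot tw (S k)) with (S (last_slot tw k))
        by (unfold first_slot, last_slot; destruct (Nat.eqb_spec k 0); simpl; lia).
      apply jumps_ok; unfold last_slot, offset in *; destruct (Nat.eqb_spec k 0);
        destruct (merged tw); intros; lia.
    + rewrite (image_right_end_slot_piece k ltac:(lia)).
      destruct (tower_view_top_left tw (S k) K) as (_ & A2 & A3 & A4).
      replace (image_left_end (tower_cet tw) (S k)) with (INR (base_slot tw) * L + top_shift tw)
        by (unfold image_left_end; simpl; rewrite A2, A3, A4; unfold top_left_len;
            destruct (top_twist tw); ring).
      apply distinct_mod1_shifted.
    + destruct (tower_view_top_left tw k ltac:(lia)) as (_ & A2 & A3 & A4).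
      destruct (tower_view_top_right tw (S k) K ltac:(lia)) as (_ & B2 & B3 & B4).
      unfold image_right_end, image_left_end. simpl. rewrite A2, A3, A4, B2, B3, B4.
      pose proof slot_len_pos. pose proof slot_len_lt1. pose proof top_shift_bounds.
      unfold top_left_len, top_right_len, distinct_mod1.
      destruct (top_twist tw); repeat split; intro; lra.
Qed.

Lemma tower_cet_ok : cet_data_ok (tower_cet tw).
Proof.
  pose proof (offset_le1 tw). split; simpl.
  - lia.
  - unfold tower_left, first_slot. destruct (Nat.ltb_spec (0 + off) (pred m)); [simpl; ring|lia].
  - exact tower_left_S.
  - exact tower_left_last.
  - exact tower_width_pos.
  - exact tower_target_bounds.
  - exact tower_targets_apart.
  - exact tower_cet_jumps.
Qed.

Local Notation T := (cet_map (tower_cet tw)).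
Local Notation Dom := (dom N (cet_piece (tower_cet tw))).

Lemma tower_map_on_piece (i : nat) (u : R) : (i < N)%nat ->
  tower_left tw i < u < tower_left tw i + tower_width tw i ->
  Dom u /\ T u = piece_map (tower_cet tw) i u.
Proof.
  intros Hi Hu. split.
  - exists i. split; [exact Hi|]. apply (cet_piece_intro _ tower_cet_ok); auto.
  - apply (cet_map_eq _ tower_cet_ok); auto.
Qed.

Definition slot_map (p : nat) (u : R) : R :=
  if slot_twist tw p then INR (next_slot tw p + p + 1) * L - u
  else u + INR (next_slot tw p) * L - INR p * L.

Lemma tower_map_on_slot (p : nat) (u : R) : (p < pred m)%nat -> INR p * L < u < INR (S p) * L ->
  Dom u /\ T u = slot_map p u.
Proof.
  intros Hp Hu. pose proof (offset_le1 tw).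
  set (i := if Nat.leb p off then 0%nat else (p - off)%nat).
  assert (Hi : (first_slot tw i <= p <= last_slot tw i)%nat /\ (i + off < pred m)%nat).
  { unfold i, first_slot, last_slot. destruct (Nat.leb_spec p off); simpl; [lia|].
    destruct (Nat.eqb_spec (p - off) 0); lia. }
  destruct Hi as [Hpi Hik]. pose proof (first_last_slot tw i).
  destruct (tower_view_slot tw i Hik) as (A1 & A2 & A3 & A4).
  destruct (tower_map_on_piece i u ltac:(lia)) as [Hd ->]; [|split; [exact Hd|]].
  { rewrite A1, A2, <- Rmult_plus_distr_r, <- plus_INR. split.
    - apply Rle_lt_trans with (INR p * L); [apply slot_le; lia|lra].
    - eapply Rlt_le_trans; [apply Hu|]. apply slot_le. lia. }
  unfold piece_map, slot_map. simpl. rewrite A1, A2, A3, A4.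
  destruct (Nat.eq_dec (first_slot tw i) (last_slot tw i)) as [E|E].
  - replace (last_slot tw i) with p by lia. replace (first_slot tw i) with p by lia.
    rewrite Nat.sub_succ_l, Nat.sub_diag, INR_1 by lia.
    destruct (slot_twist tw p); [rewrite !plus_INR, INR_1|]; ring.
  - destruct (merged_first_slot i E) as (F1 & F2 & F3).
    destruct (first_ne_last_slot tw i E) as (_ & _ & E1 & E2). rewrite E1, E2 in *. rewrite F1.
    assert (Hp01 : p = 0%nat \/ p = 1%nat) by lia.
    destruct Hp01 as [ -> | -> ]; [rewrite F2, F3|rewrite F1];
      rewrite !plus_INR, !S_INR; simpl; ring.
Qed.

(* the point at height [j] above the point [x] of the base level *)
Definition tower_point (j : nat) (x : R) : R :=
  if twist_parity tw j then INR (S (slot tw j)) * L - x else INR (slot tw j) * L + x.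

Lemma tower_point_S (j : nat) (x : R) : (j < pred m)%nat -> 0 < x < L ->
  Dom (tower_point j x) /\ T (tower_point j x) = tower_point (S j) x.
Proof.
  intros Hj Hx. destruct (slot_bij j ltac:(lia)) as [Hpm Hlev]. set (p := slot tw j) in *.
  assert (Hp : (p < pred m)%nat).
  { destruct (Nat.eq_dec p (pred m)) as [E|]; [|lia].
    rewrite <- top_slot in E. apply slot_injective in E; lia. }
  assert (Hu : INR p * L < tower_point j x < INR (S p) * L)
    by (unfold tower_point; fold p; rewrite S_INR; destruct (twist_parity tw j); lra).
  destruct (tower_map_on_slot p _ Hp Hu) as [Hd ->]. split; [exact Hd|].
  unfold slot_map, tower_point, next_slot, slot_twist. fold p. rewrite Hlev. simpl twist_parity.
  destruct (twist_parity tw j), (twist tw j); cbn [xorb]; rewrite ?plus_INR, ?S_INR, ?INR_0; ring.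
Qed.

Lemma tower_point_climb (j : nat) (x : R) : (j < m)%nat -> 0 < x < L ->
  fwd Dom T j (tower_point 0 x) (tower_point j x).
Proof.
  intros Hj Hx. induction j as [|j IH]; [reflexivity|].
  destruct (tower_point_S j x ltac:(lia) Hx) as [Hd HT].
  exists (tower_point j x). split; [apply IH; lia|]. auto.
Qed.

Lemma tower_map_on_top (x : R) : 0 < x < L -> x <> L - top_shift tw ->
  Dom (tower_point (pred m) x) /\
  T (tower_point (pred m) x) = tower_point 0 (interval_rotation L (top_shift tw) x).
Proof.
  intros Hx Hne. pose proof (offset_le1 tw). pose proof top_shift_bounds.
  destruct (tower_view_top_left tw (pred m - off) ltac:(lia)) as (A1 & A2 & A3 & A4).
  destruct (tower_view_top_right tw (m - off) ltac:(lia) ltac:(lia)) as (B1 & B2 & B3 & B4).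
  assert (HTL := fun u => tower_map_on_piece (pred m - off) u ltac:(lia)).
  assert (HTR := fun u => tower_map_on_piece (m - off) u ltac:(lia)).
  unfold piece_map in HTL, HTR. simpl in HTL, HTR.
  rewrite A1, A2, A3, A4 in HTL. rewrite B1, B2, B3, B4 in HTR.
  unfold tower_point, interval_rotation. rewrite top_slot. fold (top_twist tw). simpl twist_parity.
  unfold base_slot, top_left_len, top_right_len in *. rewrite S_INR.
  destruct (Rlt_dec x (L - top_shift tw)) as [Hlt|Hge].
  2: assert (L - top_shift tw < x)
       by (destruct (Rle_lt_or_eq_dec _ _ (Rnot_lt_le _ _ Hge)); [lra|congruence]).
  all: destruct (top_twist tw).
  - destruct (HTR ((INR (pred m) + 1) * L - x)) as [Hd HT]; [lra|]. rewrite HT. split; [auto|ring].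
  - destruct (HTL (INR (pred m) * L + x)) as [Hd HT]; [lra|]. rewrite HT. split; [auto|ring].
  - destruct (HTL ((INR (pred m) + 1) * L - x)) as [Hd HT]; [lra|]. rewrite HT. split; [auto|ring].
  - destruct (HTR (INR (pred m) * L + x)) as [Hd HT]; [lra|]. rewrite HT. split; [auto|ring].
Qed.

Lemma tower_point_return (x : R) : 0 < x < L -> x <> L - top_shift tw ->
  fwd Dom T m (tower_point 0 x) (tower_point 0 (interval_rotation L (top_shift tw) x)).
Proof.
  intros Hx Hne. replace (fwd Dom T m) with (fwd Dom T (S (pred m))) by (f_equal; lia).
  destruct (tower_map_on_top x Hx Hne) as [Hd HT].
  exists (tower_point (pred m) x). split; [apply tower_point_climb; auto; lia|]. auto.
Qed.

Lemma tower_points_dense (y eps : R) : in_circle y -> 0 < eps ->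
  exists j x, (j < m)%nat /\ 0 < x < L /\ cdist y (tower_point j x) < eps.
Proof.
  intros Hy He. pose proof slot_len_pos. pose proof height_mul_slot_len. unfold in_circle in Hy.
  destruct (nat_floor_div y L) as [p Hp]; [lra|lra|].
  assert (Hpm : (p < m)%nat).
  { destruct (Nat.lt_ge_cases p m) as [|Hge]; auto. apply slot_le in Hge. lra. }
  destruct (level_bij p Hpm) as [Hj Hjp]. set (j := level tw p) in *.
  pose proof (Rmin_l (eps / 2) (L / 4)). pose proof (Rmin_r (eps / 2) (L / 4)).
  assert (0 < Rmin (eps / 2) (L / 4)) by (apply Rmin_glb_lt; lra).
  set (h := Rmin (eps / 2) (L / 4)) in *.
  set (y' := if Rlt_dec y (INR p * L + L / 2) then y + h else y - h).
  assert (Hy' : INR p * L < y' < INR p * L + L /\ Rabs (y - y') <= h).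
  { unfold y'. destruct Rlt_dec.
    - split; [lra|]. rewrite Rabs_left1; lra.
    - split; [lra|]. rewrite Rabs_right; lra. }
  exists j, (if twist_parity tw j then INR p * L + L - y' else y' - INR p * L).
  split; [exact Hj|]. split; [destruct (twist_parity tw j); lra|].
  replace (tower_point j _) with y'
    by (unfold tower_point; rewrite Hjp, S_INR; destruct (twist_parity tw j); ring).
  eapply Rle_lt_trans; [apply cdist_le_abs|]. lra.
Qed.

Lemma count_slot_twists :
  count_range (slot_twist tw) 0 (pred m) = count_range (twist tw) 0 (pred m).
Proof.
  unfold count_range, slot_twist. rewrite <- (length_map (level tw)), <- filter_map_swap.
  symmetry. apply Permutation_filter_length, NoDup_Permutation.
  - apply seq_NoDup.
  - apply NoDup_map_NoDup_ForallPairs; [|apply seq_NoDup].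
    intros x y Hx Hy E. apply in_seq in Hx. apply in_seq in Hy.
    rewrite <- (proj2 (level_bij x ltac:(lia))), <- (proj2 (level_bij y ltac:(lia))), E.
    reflexivity.
  - intros x. rewrite in_map_iff, in_seq. split.
    + intros Hx. exists (slot tw x). rewrite in_seq. destruct (slot_bij x ltac:(lia)) as [Hl Hlx].
      split; [exact Hlx|]. split; [lia|].
      destruct (Nat.eq_dec (slot tw x) (pred m)) as [E|]; [|lia].
      rewrite <- top_slot in E. apply slot_injective in E; lia.
    + intros [p [<- Hp]]. apply in_seq in Hp.
      pose proof (level_below_top p ltac:(lia) ltac:(lia)). lia.
Qed.

(* Merging the slots [0] and [1], both flips, into a single piece removes one flip. *)
Lemma tower_flip_count :
  (flip_count (tower_cet tw) + offset tw =
   count_range (twist tw) 0 (pred m) + if top_twist tw then 2 else 0)%nat.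
Proof.
  pose proof (offset_le1 tw) as Ho.
  rewrite <- count_slot_twists.
  unfold flip_count. simpl. fold (count_range (tower_flip tw) 0 (m + 1 - offset tw)).
  replace (m + 1 - offset tw)%nat with ((pred m - offset tw) + 2)%nat by lia.
  rewrite count_range_add. simpl (0 + _)%nat.
  replace (count_range (tower_flip tw) (pred m - offset tw) 2)
    with (if top_twist tw then 2 else 0)%nat.
  2: { unfold count_range. simpl. unfold tower_flip.
       destruct (Nat.ltb_spec (pred m - offset tw + offset tw) (pred m)); [lia|].
       destruct (Nat.ltb_spec (S (pred m - offset tw) + offset tw) (pred m)); [lia|].
       destruct (top_twist tw); reflexivity. }
  rewrite (count_range_ext _ (fun i => slot_twist tw (last_slot tw i)))
    by (intros i Hi; unfold tower_flip;
        destruct (Nat.ltb_spec (i + offset tw) (pred m)); [reflexivity|lia]).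
  unfold last_slot, offset in *. destruct (merged tw) eqn:Em.
  - destruct (merge_ok eq_refl) as (F0 & F1 & _).
    replace (pred m - 1)%nat with (1 + (pred m - 2))%nat by lia.
    replace (pred m) with (2 + (pred m - 2))%nat at 2 by lia.
    rewrite !count_range_add.
    rewrite (count_range_ext _ (fun i => slot_twist tw (i + 1)) (0 + 1))
      by (intros i Hi; destruct (Nat.eqb_spec i 0); [lia|reflexivity]).
    rewrite count_range_shift. unfold count_range at 1 3. simpl. rewrite F0, F1. simpl. lia.
  - rewrite Nat.sub_0_r, Nat.add_0_r. f_equal. apply count_range_ext.
    intros i Hi. destruct (Nat.eqb_spec i 0); subst; rewrite ?Nat.add_0_r; reflexivity.
Qed.

Theorem tower_in_C : in_C N (flip_count (tower_cet tw)) T.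
Proof.
  exists (cet_piece (tower_cet tw)).
  split; [apply (cet_data_is_CET _ tower_cet_ok)|].
  split; [|apply (cet_data_flips _ tower_cet_ok)].
  pose proof slot_len_pos. pose proof height_mul_slot_len. pose proof base_slot_lt.
  apply (tower_transitive _ _ m L alpha0 tower_point); auto.
  - apply alpha0_bounds.
  - apply alpha0_irrational.
  - intros x Hx. unfold tower_point. simpl. fold (base_slot tw).
    pose proof (slot_le (S (base_slot tw)) m ltac:(lia)). rewrite S_INR in *.
    assert (0 <= INR (base_slot tw) * L) by (apply Rmult_le_pos; [apply pos_INR|lra]).
    unfold in_circle. lra.
  - apply tower_point_return.
  - apply tower_point_climb.
  - intros j x y Hj. unfold tower_point. destruct (twist_parity tw j).
    + rewrite <- Rabs_Ropp. f_equal. ring.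
    + f_equal. ring.
  - apply tower_points_dense.
Qed.

End Tower.

Definition tower_flips (tw : tower) : nat :=
  count_range (twist tw) 0 (pred (height tw)) + (if top_twist tw then 2 else 0) - offset tw.

Theorem tower_realizes (tw : tower) : tower_ok tw ->
  exists T, in_C (height tw + 1 - offset tw) (tower_flips tw) T.
Proof.
  intros [H1 H2 H3 H4 H5 H6]. exists (cet_map (tower_cet tw)).
  replace (tower_flips tw) with (flip_count (tower_cet tw))
    by (unfold tower_flips; rewrite <- tower_flip_count; auto; lia).
  apply tower_in_C; auto.
Qed.

(** * Explicit towers *)

Local Open Scope bool_scope.

Definition distinct_modb (m a b : nat) : bool :=
  negb (Nat.eqb a b) && negb (Nat.eqb a (b + m)) && negb (Nat.eqb b (a + m)).

Definition tower_okb (tw : tower) : bool :=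
  Nat.leb 3 (height tw) &&
  forallb (fun j => Nat.ltb (slot tw j) (height tw) && Nat.eqb (level tw (slot tw j)) j)
    (seq 0 (height tw)) &&
  forallb (fun p => Nat.ltb (level tw p) (height tw) && Nat.eqb (slot tw (level tw p)) p)
    (seq 0 (height tw)) &&
  Nat.eqb (slot tw (pred (height tw))) (pred (height tw)) &&
  (if merged tw then
     slot_twist tw 0 && slot_twist tw 1 && Nat.eqb (next_slot tw 0) (S (next_slot tw 1))
   else true) &&
  forallb (fun p => if Nat.ltb (S p) (pred (height tw)) && (negb (merged tw) || negb (Nat.eqb p 0))
                    then distinct_modb (height tw) (end_image tw p) (start_image tw (S p))
                    else true)
    (seq 0 (height tw)).

Lemma tower_okb_sound (tw : tower) : tower_okb tw = true -> tower_ok tw.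
Proof.
  unfold tower_okb. rewrite !Bool.andb_true_iff, !forallb_forall.
  intros (((((H1 & H2) & H3) & H4) & H5) & H6). split.
  - apply Nat.leb_le, H1.
  - intros j Hj. specialize (H2 j ltac:(apply in_seq; lia)).
    rewrite Bool.andb_true_iff, Nat.ltb_lt, Nat.eqb_eq in H2. exact H2.
  - intros p Hp. specialize (H3 p ltac:(apply in_seq; lia)).
    rewrite Bool.andb_true_iff, Nat.ltb_lt, Nat.eqb_eq in H3. exact H3.
  - apply Nat.eqb_eq, H4.
  - intros Hm. rewrite Hm, !Bool.andb_true_iff, Nat.eqb_eq in H5. tauto.
  - intros p Hp Hm. specialize (H6 p ltac:(apply in_seq; lia)).
    replace (Nat.ltb (S p) (pred (height tw)) && (negb (merged tw) || negb (Nat.eqb p 0)))%bool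
      with true in H6.
    + unfold distinct_modb in H6.
      rewrite !Bool.andb_true_iff, !Bool.negb_true_iff, !Nat.eqb_neq in H6.
      unfold distinct_mod. tauto.
    + symmetry. apply Bool.andb_true_iff. split; [apply Nat.ltb_lt; auto|].
      destruct (merged tw); [|reflexivity]. destruct (Nat.eqb_spec p 0); [|reflexivity].
      exfalso. apply Hm; auto.
Qed.

Definition realizesb (tw : tower) (n f : nat) : bool :=
  tower_okb tw && Nat.eqb (height tw + 1 - offset tw) n && Nat.eqb (tower_flips tw) f.

Lemma realizesb_sound (tw : tower) (n f : nat) : realizesb tw n f = true -> exists T, in_C n f T.
Proof.
  unfold realizesb. rewrite !Bool.andb_true_iff, !Nat.eqb_eq. intros ((Hok & <-) & <-).
  apply tower_realizes, tower_okb_sound, Hok.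
Qed.

Fixpoint inverse_upto (f : nat -> nat) (p k : nat) : nat :=
  match k with
  | O => 0%nat
  | S k' => if Nat.eqb (f k') p then k' else inverse_upto f p k'
  end.

(* [tower_okb] checks that the computed [level] inverts [slot]. *)
Definition list_tower (slots : list nat) (twists : list bool) (mg : bool) : tower :=
  let sl := fun j => nth j slots 0%nat in
  mk_tower (length slots) sl (fun p => inverse_upto sl p (length slots))
    (fun j => nth j twists false) mg.

Definition small_tower (n f : nat) : tower :=
  match n, f with
  | 4, 1 => list_tower [1; 2; 0; 3]%nat [true; false; true] true
  | 4, 2 => list_tower [0; 1; 2]%nat [true; true] false
  | 4, 3 => list_tower [0; 1; 2]%nat [false; true] false
  | 4, 4 => list_tower [1; 2; 0; 3]%nat [true; true; true] true
  | 5, 1 => list_tower [0; 3; 1; 2; 4]%nat [true; false; true; false] true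
  | 5, 2 => list_tower [0; 1; 2; 3]%nat [false; true; true] false
  | 5, 3 => list_tower [0; 1; 2; 3]%nat [false; true; false] false
  | 5, 4 => list_tower [0; 3; 1; 2; 4]%nat [true; false; true; true] true
  | 5, 5 => list_tower [0; 1; 2; 3]%nat [true; true; true] false
  | 6, 1 => list_tower [0; 3; 1; 2; 4; 5]%nat [true; false; true; false; false] true
  | 6, 2 => list_tower [0; 1; 2; 3; 4]%nat [false; true; false; true] false
  | 6, 3 => list_tower [0; 1; 3; 2; 4]%nat [false; false; false; true] false
  | 6, 4 => list_tower [0; 1; 2; 3; 4]%nat [true; true; true; true] false
  | 6, 5 => list_tower [0; 1; 2; 3; 4]%nat [false; true; true; true] false
  | 6, 6 => list_tower [0; 3; 1; 2; 4; 5]%nat [true; true; true; true; true] true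
  | 7, 1 => list_tower [0; 3; 1; 2; 5; 4; 6]%nat [true; false; true; false; false; false] true
  | 7, 2 => list_tower [0; 1; 2; 3; 4; 5]%nat [false; true; false; true; false] false
  | 7, 3 => list_tower [0; 1; 3; 2; 4; 5]%nat [false; false; false; true; false] false
  | 7, 4 => list_tower [0; 1; 2; 3; 4; 5]%nat [false; true; true; true; true] false
  | 7, 5 => list_tower [0; 1; 2; 3; 4; 5]%nat [false; true; false; true; true] false
  | 7, 6 => list_tower [0; 3; 1; 2; 4; 5; 6]%nat [true; false; true; true; true; true] true
  | 7, 7 => list_tower [0; 1; 2; 3; 4; 5]%nat [true; true; true; true; true] false
  | 8, 1 => list_tower [0; 3; 1; 2; 5; 4; 6; 7]%nat
                      [true; false; true; false; false; false; false] true
  | 8, 2 => list_tower [0; 1; 2; 3; 5; 4; 6]%nat [false; true; false; false; false; true] false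
  | 8, 3 => list_tower [0; 1; 2; 4; 5; 3; 6]%nat [false; true; false; false; false; false] false
  | 8, 4 => list_tower [0; 1; 2; 3; 4; 5; 6]%nat [false; true; false; true; true; true] false
  | 8, 5 => list_tower [0; 1; 2; 3; 4; 5; 6]%nat [false; true; false; true; false; true] false
  | 8, 6 => list_tower [0; 1; 2; 3; 4; 5; 6]%nat [true; true; true; true; true; true] false
  | 8, 7 => list_tower [0; 1; 2; 3; 4; 5; 6]%nat [false; true; true; true; true; true] false
  | 8, 8 => list_tower [0; 3; 1; 2; 4; 5; 6; 7]%nat [true; true; true; true; true; true; true] true
  | _, _ => list_tower []%nat [] false
  end.

Lemma small_towers_realize :
  forallb (fun n => forallb (fun f => realizesb (small_tower n f) n f) (seq 1 n)) (seq 4 5) = true.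
Proof. vm_compute. reflexivity. Qed.

Lemma small_cases (n f : nat) : (4 <= n <= 8)%nat -> (1 <= f <= n)%nat -> exists T, in_C n f T.
Proof.
  intros Hn Hf. apply (realizesb_sound (small_tower n f)).
  pose proof small_towers_realize as H. rewrite forallb_forall in H.
  specialize (H n ltac:(apply in_seq; lia)). rewrite forallb_forall in H.
  apply H, in_seq. lia.
Qed.

Definition twisted_tower (m : nat) : tower :=
  mk_tower m (fun j => j) (fun p => p) (fun _ => true) false.

Lemma twisted_tower_ok (m : nat) : (3 <= m)%nat -> tower_ok (twisted_tower m).
Proof.
  intros Hm. split; simpl; auto; try discriminate.
  intros p Hp _. unfold distinct_mod, end_image, start_image, slot_twist, next_slot. simpl. lia.
Qed.

Ltac nat_cases := repeat (match goal with
 | |- context [Nat.eqb ?a ?b] => destruct (Nat.eqb_spec a b)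
 | |- context [Nat.ltb ?a ?b] => destruct (Nat.ltb_spec a b)
 | H : context [Nat.eqb ?a ?b] |- _ => destruct (Nat.eqb_spec a b)
 | H : context [Nat.ltb ?a ?b] |- _ => destruct (Nat.ltb_spec a b)
 end; cbv beta iota in *).

(* Levels [0, 1, 2, ...] fill the slots [0, 3, 4, 6, 8, ...], then the odd slots downwards, then
   the slots [1, 2] and the top slot: two adjacent slots are always followed by slots at distance
   at least two, which gives the jumps for any choice of twists. *)
Definition zigzag_slot (m j : nat) : nat :=
  if Nat.eqb j 0 then 0 else if Nat.eqb j 1 then 3 else if Nat.eqb j (m-1) then (m-1)%nat
  else if Nat.eqb j (m-2) then 2%nat else if Nat.eqb j (m-3) then 1%nat
  else if Nat.ltb (2*j) (m-1) then (2*j)%nat else (2*m-3-2*j)%nat.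

Definition zigzag_level (m p : nat) : nat :=
  if Nat.eqb p 0 then 0 else if Nat.eqb p 1 then (m-3)%nat else if Nat.eqb p 2 then (m-2)%nat
  else if Nat.eqb p 3 then 1%nat else if Nat.eqb p (m-1) then (m-1)%nat
  else if Nat.even p then Nat.div2 p else (m - 2 - Nat.div2 p)%nat.

Definition zigzag_tower (m : nat) (tws : nat -> bool) (mg : bool) : tower :=
  mk_tower m (zigzag_slot m) (zigzag_level m) tws mg.

Section Zigzag.

Variable m : nat.
Hypothesis Hm : (8 <= m)%nat.

Lemma zigzag_slot_lt (j : nat) : (j < m)%nat -> (zigzag_slot m j < m)%nat.
Proof. intros Hj. unfold zigzag_slot. nat_cases; lia. Qed.

Lemma zigzag_slot_injective (a b : nat) : (a < m)%nat -> (b < m)%nat ->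
  zigzag_slot m a = zigzag_slot m b -> a = b.
Proof. intros Ha Hb E. unfold zigzag_slot in E. nat_cases; lia. Qed.

Lemma zigzag_level_even (k : nat) : (4 <= 2*k < m-1)%nat -> zigzag_level m (2*k) = k.
Proof.
  intros H. unfold zigzag_level. nat_cases; try lia.
  rewrite Nat.even_mul. cbv beta iota. apply Nat.div2_double.
Qed.

Lemma zigzag_level_odd (k : nat) : (5 <= 2*k+1 < m-1)%nat ->
  zigzag_level m (2*k+1) = (m - 2 - k)%nat.
Proof.
  intros H. unfold zigzag_level. nat_cases; try lia.
  rewrite Nat.add_1_r, Nat.even_succ, Nat.odd_mul. cbv beta iota.
  rewrite Nat.div2_succ_double. reflexivity.
Qed.

Lemma zigzag_level_slot (p : nat) : (p < m)%nat ->
  (zigzag_level m p < m)%nat /\ zigzag_slot m (zigzag_level m p) = p.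
Proof.
  intros Hp.
  destruct (Nat.eq_dec p 0) as [->|]; [unfold zigzag_level, zigzag_slot; simpl; lia|].
  destruct (Nat.eq_dec p 1) as [->|]; [unfold zigzag_level, zigzag_slot; nat_cases; lia|].
  destruct (Nat.eq_dec p 2) as [->|]; [unfold zigzag_level, zigzag_slot; nat_cases; lia|].
  destruct (Nat.eq_dec p 3) as [->|]; [unfold zigzag_level, zigzag_slot; nat_cases; lia|].
  destruct (Nat.eq_dec p (m-1)) as [->|]; [unfold zigzag_level, zigzag_slot; nat_cases; lia|].
  destruct (Nat.Even_or_Odd p) as [[k ->]|[k ->]].
  - rewrite zigzag_level_even by lia. unfold zigzag_slot. nat_cases; lia.
  - rewrite zigzag_level_odd by lia. unfold zigzag_slot. nat_cases; lia.
Qed.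

Lemma zigzag_slot_level (j : nat) : (j < m)%nat ->
  (zigzag_slot m j < m)%nat /\ zigzag_level m (zigzag_slot m j) = j.
Proof.
  intros Hj. pose proof (zigzag_slot_lt j Hj).
  destruct (zigzag_level_slot (zigzag_slot m j) H) as [A B].
  split; [exact H|]. apply zigzag_slot_injective; auto.
Qed.

Lemma zigzag_slot_middle (j : nat) : (2 <= j <= m - 4)%nat ->
  (2 * j < m - 1 /\ zigzag_slot m j = 2 * j \/
   m - 1 <= 2 * j /\ zigzag_slot m j = 2 * m - 3 - 2 * j)%nat.
Proof. intros Hj. unfold zigzag_slot. nat_cases; lia. Qed.

Lemma zigzag_slot_ends :
  zigzag_slot m (m - 1) = (m - 1)%nat /\ zigzag_slot m (m - 2) = 2%nat /\
  zigzag_slot m (m - 3) = 1%nat /\ zigzag_slot m 2 = 4%nat /\ zigzag_slot m 3 = 6%nat.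
Proof. repeat split; unfold zigzag_slot; nat_cases; lia. Qed.

Lemma zigzag_level_small : zigzag_level m 1 = (m - 3)%nat /\ zigzag_level m 2 = (m - 2)%nat /\
  zigzag_level m 3 = 1%nat /\ zigzag_level m 4 = 2%nat.
Proof.
  replace 4%nat with (2 * 2)%nat by reflexivity. rewrite zigzag_level_even by lia.
  repeat split; unfold zigzag_level; nat_cases; lia.
Qed.

Lemma zigzag_next_far (p : nat) : (1 <= p)%nat -> (S p < m - 1)%nat ->
  let a := zigzag_slot m (S (zigzag_level m p)) in
  let b := zigzag_slot m (S (zigzag_level m (S p))) in
  (a <> b /\ b <> S a /\ a <> S b /\ a < m /\ b < m /\ a <> 0 /\ b <> 0)%nat.
Proof.
  intros H1 H2 a b. subst a b.
  pose proof zigzag_slot_ends as (E1 & E2 & E3 & E4 & E5).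
  pose proof zigzag_level_small as (L1 & L2 & L3 & L4).
  destruct (Nat.eq_dec p 1) as [->|].
  { rewrite L1, L2. replace (S (m - 3)) with (m - 2)%nat by lia.
    replace (S (m - 2)) with (m - 1)%nat by lia. rewrite E1, E2. lia. }
  destruct (Nat.eq_dec p 2) as [->|].
  { rewrite L2, L3. replace (S (m - 2)) with (m - 1)%nat by lia. rewrite E1, E4. lia. }
  destruct (Nat.eq_dec p 3) as [->|].
  { rewrite L3, L4, E4, E5. lia. }
  destruct (Nat.Even_or_Odd p) as [[k ->]|[k ->]].
  - rewrite zigzag_level_even by lia. replace (S (2 * k)) with (2 * k + 1)%nat by lia.
    rewrite zigzag_level_odd by lia. replace (S (m - 2 - k)) with (m - 1 - k)%nat by lia.
    destruct (Nat.eq_dec k 2) as [->|Hk2].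
    + replace (m - 1 - 2)%nat with (m - 3)%nat by lia. rewrite E3.
      destruct (zigzag_slot_middle 3 ltac:(lia)) as [[A B]|[A B]]; rewrite B; lia.
    + destruct (zigzag_slot_middle (m - 1 - k) ltac:(lia)) as [[A B]|[A B]]; [lia|rewrite B].
      destruct (zigzag_slot_middle (S k) ltac:(lia)) as [[A' B']|[A' B']]; rewrite B'; lia.
  - rewrite zigzag_level_odd by lia. replace (S (2 * k + 1)) with (2 * (k + 1))%nat by lia.
    rewrite zigzag_level_even by lia. replace (S (m - 2 - k)) with (m - 1 - k)%nat by lia.
    destruct (Nat.eq_dec k 2) as [->|Hk2].
    + replace (m - 1 - 2)%nat with (m - 3)%nat by lia. rewrite E3.
      destruct (zigzag_slot_middle (S (2 + 1)) ltac:(lia)) as [[A B]|[A B]]; rewrite B; lia.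
    + destruct (zigzag_slot_middle (m - 1 - k) ltac:(lia)) as [[A B]|[A B]]; [lia|rewrite B].
      destruct (zigzag_slot_middle (S (k + 1)) ltac:(lia)) as [[A' B']|[A' B']]; rewrite B'; lia.
Qed.

Lemma zigzag_tower_ok (tws : nat -> bool) (mg : bool) :
  (mg = true -> tws 0%nat = true /\ tws (m - 3)%nat = true) -> (mg = false -> tws 0%nat = false) ->
  tower_ok (zigzag_tower m tws mg).
Proof.
  intros Ht Hf. pose proof zigzag_slot_ends as (E1 & E2 & E3 & _).
  pose proof zigzag_level_small as (L1 & _). split; simpl.
  - lia.
  - exact zigzag_slot_level.
  - exact zigzag_level_slot.
  - replace (pred m) with (m - 1)%nat by lia. exact E1.
  - intros Hmg. destruct (Ht Hmg) as [O0 O1].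
    unfold slot_twist, next_slot. simpl. rewrite L1. unfold zigzag_level at 1. simpl.
    replace (S (m - 3)) with (m - 2)%nat by lia. rewrite E2.
    repeat split; auto.
  - intros p Hp Hp0. unfold distinct_mod, end_image, start_image, slot_twist, next_slot. simpl.
    destruct (Nat.eq_dec p 0) as [->|Hne].
    + destruct mg; [exfalso; apply Hp0; auto|].
      change (zigzag_level m 0) with 0%nat. rewrite (Hf eq_refl), L1.
      replace (S (m - 3)) with (m - 2)%nat by lia. rewrite E2.
      destruct (tws (m - 3)%nat); unfold zigzag_slot; nat_cases; lia.
    + pose proof (zigzag_next_far p ltac:(lia) ltac:(lia)). simpl in H.
      destruct (tws (zigzag_level m p)), (tws (zigzag_level m (S p))); lia.
Qed.

Lemma zigzag_realizes (tws : nat -> bool) (mg : bool) (c n f : nat) :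
  (mg = true -> tws 0%nat = true /\ tws (m - 3)%nat = true) -> (mg = false -> tws 0%nat = false) ->
  count_range tws 0 (pred m) = c -> n = (m + 1 - (if mg then 1 else 0))%nat ->
  f = (c + (if Nat.odd c then 2 else 0) - (if mg then 1 else 0))%nat ->
  exists T, in_C n f T.
Proof.
  intros Ht Hf Hc -> ->. pose proof (tower_realizes _ (zigzag_tower_ok tws mg Ht Hf)) as H.
  unfold tower_flips, top_twist, offset in H. simpl in H. rewrite twist_parity_count in H.
  simpl in H. rewrite Hc in H. exact H.
Qed.

End Zigzag.

Definition twists_from_1 (s j : nat) : bool := Nat.leb 1 j && Nat.leb j s.
Definition twists_merged (s m j : nat) : bool := Nat.ltb j (s - 1) || Nat.eqb j (m - 3).

Lemma count_twists_from_1 (m s : nat) : (s <= m - 2)%nat -> (2 <= m)%nat ->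
  count_range (twists_from_1 s) 0 (pred m) = s.
Proof.
  intros Hs Hm. replace (pred m) with (1 + s + (pred m - 1 - s))%nat by lia.
  rewrite !count_range_add, (count_range_none _ 0 1), (count_range_all _ (0 + 1) s),
    (count_range_none _ (0 + 1 + s)); try lia;
    intros i Hi; unfold twists_from_1;
    destruct (Nat.leb_spec 1 i), (Nat.leb_spec i s); simpl; auto; lia.
Qed.

Lemma count_twists_merged (m s : nat) : (2 <= s <= m - 2)%nat -> (8 <= m)%nat ->
  count_range (twists_merged s m) 0 (pred m) = s.
Proof.
  intros Hs Hm. replace (pred m) with ((s - 1) + (m - 2 - s) + 1 + 1)%nat by lia.
  rewrite !count_range_add, (count_range_all _ 0 (s - 1)), (count_range_none _ (0 + (s - 1))),
    (count_range_all _ (0 + (s - 1) + (m - 2 - s)) 1),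
    (count_range_none _ (0 + (s - 1) + (m - 2 - s) + 1) 1); try lia;
    intros i Hi; unfold twists_merged;
    destruct (Nat.ltb_spec i (s - 1)), (Nat.eqb_spec i (m - 3)); simpl; auto; lia.
Qed.

Lemma twisted_tower_realizes (n : nat) : (4 <= n)%nat -> Nat.odd n = true -> exists T, in_C n n T.
Proof.
  intros Hn Hodd. pose proof (tower_realizes _ (twisted_tower_ok (n - 1) ltac:(lia))) as H.
  unfold tower_flips, top_twist, offset in H. simpl in H. rewrite twist_parity_count in H.
  rewrite !count_range_all in H by reflexivity.
  replace (pred (n - 1)) with (n - 2)%nat in H by lia.
  replace (Nat.odd (n - 2)) with true in H
    by (rewrite <- Hodd, <- (Nat.odd_add_mul_2 (n - 2) 1); f_equal; lia).
  replace (n - 1 + 1 - 0)%nat with n in H by lia. replace (n - 2 + 2 - 0)%nat with n in H by lia.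
  exact H.
Qed.

Lemma large_cases (n f : nat) : (9 <= n)%nat -> (1 <= f <= n)%nat -> exists T, in_C n f T.
Proof.
  intros Hn Hf.
  destruct (Nat.eq_dec f 1) as [->|Hf1].
  { apply (zigzag_realizes n ltac:(lia) (twists_merged 2 n) true 2).
    - intros _. unfold twists_merged. rewrite Nat.eqb_refl, Bool.orb_true_r. auto.
    - intros [=].
    - apply count_twists_merged; lia.
    - lia.
    - reflexivity. }
  destruct (Nat.Even_or_Odd f) as [[k Hk]|[k Hk]].
  - assert (Heven : Nat.odd f = false) by (rewrite Hk; apply Nat.odd_even).
    assert (Hodd : Nat.odd (f - 1) = true)
      by (replace (f - 1)%nat with (2 * (k - 1) + 1)%nat by lia; apply Nat.odd_odd).
    destruct (Nat.le_gt_cases f (n - 3)); [|destruct (Nat.le_gt_cases f (n - 1))].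
    + apply (zigzag_realizes (n - 1) ltac:(lia) (twists_from_1 f) false f); try lia.
      * reflexivity.
      * apply count_twists_from_1; lia.
      * rewrite Heven. lia.
    + apply (zigzag_realizes n ltac:(lia) (twists_merged (f - 1) n) true (f - 1)); try lia.
      * intros _. unfold twists_merged.
        split; apply Bool.orb_true_iff; [left; apply Nat.ltb_lt; lia|right; apply Nat.eqb_refl].
      * apply count_twists_merged; lia.
      * rewrite Hodd. lia.
    + apply (zigzag_realizes n ltac:(lia) (fun _ => true) true (n - 1)); try lia.
      * replace (n - 1)%nat with (pred n) by lia. apply count_range_all. reflexivity.
      * replace (n - 1)%nat with (f - 1)%nat by lia. rewrite Hodd. lia.
  - destruct (Nat.le_gt_cases f (n - 1)).
    + apply (zigzag_realizes (n - 1) ltac:(lia) (twists_from_1 (f - 2)) false (f - 2)); try lia.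
      * reflexivity.
      * apply count_twists_from_1; lia.
      * replace (f - 2)%nat with (2 * (k - 1) + 1)%nat by lia. rewrite Nat.odd_odd. lia.
    + replace f with n by lia. apply twisted_tower_realizes; [lia|].
      replace n with (2 * k + 1)%nat by lia. apply Nat.odd_odd.
Qed.

Theorem theorem9p1 : forall n f : nat, (4 <= n)%nat -> (1 <= f <= n)%nat ->
  exists T : R -> R, in_C n f T.
Proof.
  intros n f Hn Hf. destruct (Nat.le_gt_cases n 8).
  - apply small_cases; lia.
  - apply large_cases; lia.
Qed.
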